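(* Let $X$ be a real Hilbert space, let $U,V$ be closed affine subspaces of $X$ (not necessarily intersecting), let $T:=T_{U,V}$, $v:=P_{\overline{\operatorname{ran}}(\mathrm{Id}-T)}0$, and assume $v\in\operatorname{ran}(\mathrm{Id}-T)$. Let $x\in X$. Then for every $n\in\mathbb N$, $$P_UT^nx=P_U(T^nx+nv)=P_U((T_{-v})^nx)=P_U(T_{U,v+V}^nx)=J_{-v+N_U}((T_{-v})^nx),$$ and $P_UT^nx\to P_{U\cap(v+V)}x$ as $n\to\infty$ (in norm). Moreover, if $\operatorname{par}U+\operatorname{par}V$ is closed (e.g. if $X$ is finite-dimensional), then the convergence is linear with rate $c_F(\operatorname{par}U,\operatorname{par}V)<1$, i.e. $\big(c_F^{-n}\|P_UT^nx-P_{U\cap(v+V)}x\|\big)_n$ is bounded.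
   Context: $T_{U,V}:=\mathrm{Id}-P_U+P_V(2P_U-\mathrm{Id})$ (Douglas–Rachford operator for the normal cones of $U,V$); $v$ equals $P_{\overline{U-V}}0$. $T_{-v}x:=T(x+v)$. $J_{-v+N_U}:=(\mathrm{Id}+N_U-v)^{-1}$. $\operatorname{par}U:=U-U$. With $W:=\operatorname{par}U\cap\operatorname{par}V$ and $\mathbb B$ the closed unit ball, the cosine of the Friedrichs angle is $c_F(\operatorname{par}U,\operatorname{par}V):=\sup\{|\langle u,w\rangle|: u\in\operatorname{par}U\cap W^\perp\cap\mathbb B,\ w\in\operatorname{par}V\cap W^\perp\cap\mathbb B\}$. *)

From Stdlib Require Import Reals Lra ClassicalEpsilon.
Open Scope R_scope.

Record HilbertSpace := {
  carrier :> Type;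
  hzero : carrier;
  hadd : carrier -> carrier -> carrier;
  hopp : carrier -> carrier;
  hscal : R -> carrier -> carrier;
  hinner : carrier -> carrier -> R;
  hadd_assoc : forall x y z, hadd x (hadd y z) = hadd (hadd x y) z;
  hadd_comm : forall x y, hadd x y = hadd y x;
  hadd_0 : forall x, hadd x hzero = x;
  hadd_opp : forall x, hadd x (hopp x) = hzero;
  hscal_1 : forall x, hscal 1 x = x;
  hscal_assoc : forall a b x, hscal a (hscal b x) = hscal (a * b) x;
  hscal_distr_l : forall a x y, hscal a (hadd x y) = hadd (hscal a x) (hscal a y);
  hscal_distr_r : forall a b x, hscal (a + b) x = hadd (hscal a x) (hscal b x);
  hinner_sym : forall x y, hinner x y = hinner y x;
  hinner_add_l : forall x y z, hinner (hadd x y) z = hinner x z + hinner y z;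
  hinner_scal_l : forall a x y, hinner (hscal a x) y = a * hinner x y;
  hinner_pos : forall x, 0 <= hinner x x;
  hinner_def : forall x, hinner x x = 0 -> x = hzero;
  hcomplete : forall u : nat -> carrier,
    (forall eps, eps > 0 -> exists N, forall m n, (m >= N)%nat -> (n >= N)%nat ->
        sqrt (hinner (hadd (u m) (hopp (u n))) (hadd (u m) (hopp (u n)))) < eps) ->
    exists l, forall eps, eps > 0 -> exists N, forall n, (n >= N)%nat ->
        sqrt (hinner (hadd (u n) (hopp l)) (hadd (u n) (hopp l))) < eps
}.

Arguments hzero {X} : rename.
Arguments hadd {X} : rename.
Arguments hopp {X} : rename.
Arguments hscal {X} : rename.
Arguments hinner {X} : rename.

Section HilbertDefs.
Variable X : HilbertSpace.

Definition hsub (x y : X) : X := hadd x (hopp y).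
Definition hnorm (x : X) : R := sqrt (hinner x x).

Definition converges (u : nat -> X) (l : X) : Prop :=
  forall eps, eps > 0 -> exists N, forall n, (n >= N)%nat -> hnorm (hsub (u n) l) < eps.

Definition is_closed (C : X -> Prop) : Prop :=
  forall (u : nat -> X) l, (forall n, C (u n)) -> converges u l -> C l.

Definition closure (C : X -> Prop) : X -> Prop :=
  fun x => exists u : nat -> X, (forall n, C (u n)) /\ converges u x.

Definition is_affine (C : X -> Prop) : Prop :=
  forall x y t, C x -> C y -> C (hadd (hscal t x) (hscal (1 - t) y)).

Definition closed_affine (C : X -> Prop) : Prop :=
  (exists x, C x) /\ is_affine C /\ is_closed C.

(* metric projection P_C x: the (unique, when C is nonempty closed convex)
   nearest point of C to x *)
Definition proj (C : X -> Prop) (x : X) : X :=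
  epsilon (inhabits hzero)
    (fun p => C p /\ forall c, C c -> hnorm (hsub x p) <= hnorm (hsub x c)).

Definition DR (U V : X -> Prop) (x : X) : X :=
  hadd (hsub x (proj U x)) (proj V (hsub (hscal 2 (proj U x)) x)).

Definition translate (v : X) (V : X -> Prop) : X -> Prop :=
  fun y => exists w, V w /\ y = hadd v w.

Definition inter (A B : X -> Prop) : X -> Prop := fun x => A x /\ B x.

Definition ran_Id_minus (T : X -> X) : X -> Prop :=
  fun y => exists z, y = hsub z (T z).

(* T_{-v} x := T (x + v) *)
Definition Tshift (T : X -> X) (v : X) (x : X) : X := T (hadd x v).

Definition normal_cone (U : X -> Prop) (x u : X) : Prop :=
  U x /\ forall c, U c -> hinner u (hsub c x) <= 0.

(* resolvent J_{-v + N_U} = (Id + N_U - v)^{-1}: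
   z = J y  iff  y \in z + N_U(z) - v  iff  y - z + v \in N_U(z) *)
Definition resolvent_shift (v : X) (U : X -> Prop) (y : X) : X :=
  epsilon (inhabits hzero) (fun z => normal_cone U z (hadd (hsub y z) v)).

Definition par (U : X -> Prop) : X -> Prop :=
  fun d => exists a b, U a /\ U b /\ d = hsub a b.

Definition msum (A B : X -> Prop) : X -> Prop :=
  fun d => exists a b, A a /\ B b /\ d = hadd a b.

Definition orth_compl (W : X -> Prop) : X -> Prop :=
  fun u => forall w, W w -> hinner u w = 0.

Definition cF_set (A B : X -> Prop) : R -> Prop :=
  fun r => exists u w,
    A u /\ orth_compl (inter A B) u /\ hnorm u <= 1 /\
    B w /\ orth_compl (inter A B) w /\ hnorm w <= 1 /\
    r = Rabs (hinner u w).

Definition cF (A B : X -> Prop) : R :=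
  epsilon (inhabits 0) (fun c => is_lub (cF_set A B) c).

End HilbertDefs.

Arguments hsub {X}.
Arguments hnorm {X}.
Arguments converges {X}.
Arguments is_closed {X}.
Arguments closure {X}.
Arguments is_affine {X}.
Arguments closed_affine {X}.
Arguments proj {X}.
Arguments DR {X}.
Arguments translate {X}.
Arguments inter {X}.
Arguments ran_Id_minus {X}.
Arguments Tshift {X}.
Arguments normal_cone {X}.
Arguments resolvent_shift {X}.
Arguments par {X}.
Arguments msum {X}.
Arguments orth_compl {X}.
Arguments cF_set {X}.
Arguments cF {X}.

(* The minimal displacement vector v is orthogonal to par U and par V, so
   translating V by v, or the iterates by multiples of v, leaves their
   projections onto U unchanged; this gives the chain of identities and
   reduces the problem to the intersecting pair U, v + V.  For z in
   U ∩ (v + V), the operator T_{U,v+V} is conjugate, by translation by z, to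
   the linear Douglas–Rachford operator of the subspaces par U and par V.  This
   operator is firmly nonexpansive, so its iterates tend to 0 on the closure of
   its range (asymptotic regularity), and the error P_U T^n x - P_{U ∩ (v+V)} x
   is the par U-component of such an orbit.  When par U + par V is closed, a Baire
   (open mapping) argument bounds the summands of decompositions in the sum;
   this forces c_F < 1 and makes the operator a c_F-contraction on the
   orthogonal complement of its fixed points. *)

From Stdlib Require Import Reals Lra Lia Psatz ClassicalEpsilon Classical
  FunctionalExtensionality PropExtensionality.
Open Scope R_scope.

Arguments hadd_assoc {_}. Arguments hadd_comm {_}. Arguments hadd_0 {_}.
Arguments hadd_opp {_}. Arguments hinner_sym {_}.
Arguments hinner_add_l {_}. Arguments hinner_scal_l {_}. Arguments hinner_pos {_}.
Arguments hinner_def {_}. Arguments hcomplete {_}.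

Section InnerProduct.
Context {X : HilbertSpace}.
Implicit Types x y z : X.

Lemma hadd_0l x : hadd hzero x = x.
Proof. rewrite hadd_comm; apply hadd_0. Qed.

Lemma inner_add_r x y z : hinner x (hadd y z) = hinner x y + hinner x z.
Proof. rewrite hinner_sym, hinner_add_l, (hinner_sym y), (hinner_sym z); ring. Qed.

Lemma inner_scal_r a x y : hinner x (hscal a y) = a * hinner x y.
Proof. rewrite hinner_sym, hinner_scal_l, hinner_sym; ring. Qed.

Lemma inner_0_l y : hinner hzero y = 0.
Proof.
  assert (H : hinner (hadd hzero hzero) y = hinner hzero y) by (rewrite hadd_0; auto).
  rewrite hinner_add_l in H; lra.
Qed.

Lemma inner_0_r y : hinner y hzero = 0.
Proof. rewrite hinner_sym; apply inner_0_l. Qed.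

Lemma inner_opp_l x y : hinner (hopp x) y = - hinner x y.
Proof.
  assert (H : hinner (hadd x (hopp x)) y = 0) by (rewrite hadd_opp; apply inner_0_l).
  rewrite hinner_add_l in H; lra.
Qed.

Lemma inner_opp_r x y : hinner x (hopp y) = - hinner x y.
Proof. rewrite hinner_sym, inner_opp_l, hinner_sym; auto. Qed.

Lemma inner_sub_l x y z : hinner (hsub x y) z = hinner x z - hinner y z.
Proof. unfold hsub; rewrite hinner_add_l, inner_opp_l; ring. Qed.

Lemma inner_sub_r x y z : hinner z (hsub x y) = hinner z x - hinner z y.
Proof. unfold hsub; rewrite inner_add_r, inner_opp_r; ring. Qed.

Lemma hsub_eq0 x y : hsub x y = hzero -> x = y.
Proof.
  unfold hsub; intro H.
  assert (E : hadd (hadd x (hopp y)) y = hadd hzero y) by (rewrite H; auto).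
  rewrite <- hadd_assoc, (hadd_comm (hopp y)), hadd_opp, hadd_0, hadd_0l in E; auto.
Qed.

Lemma eq_of_inner_sub x y : hinner (hsub x y) (hsub x y) = 0 -> x = y.
Proof. intro H; apply hsub_eq0, hinner_def, H. Qed.

End InnerProduct.

#[global] Hint Rewrite @hinner_add_l @inner_add_r @hinner_scal_l @inner_scal_r
  @inner_opp_l @inner_opp_r @inner_0_l @inner_0_r @inner_sub_l @inner_sub_r : inner.

(* A vector identity [x = y] holds as soon as [<x - y, x - y> = 0] is a ring
   identity after expanding the inner product bilinearly. *)
Ltac vring := apply eq_of_inner_sub; autorewrite with inner; ring.

Section Norm.
Context {X : HilbertSpace}.
Implicit Types x y z : X.

Definition sqnorm (x : X) : R := hinner x x.

Lemma sqnorm_ge0 x : 0 <= sqnorm x.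
Proof. apply hinner_pos. Qed.

Lemma sqnorm_eq0 x : sqnorm x = 0 -> x = hzero.
Proof. apply hinner_def. Qed.

Lemma sqnorm_add x y : sqnorm (hadd x y) = sqnorm x + 2 * hinner x y + sqnorm y.
Proof. unfold sqnorm; autorewrite with inner; rewrite (hinner_sym y x); ring. Qed.

Lemma sqnorm_sub x y : sqnorm (hsub x y) = sqnorm x - 2 * hinner x y + sqnorm y.
Proof. unfold sqnorm; autorewrite with inner; rewrite (hinner_sym y x); ring. Qed.

Lemma sqnorm_scal t x : sqnorm (hscal t x) = t * t * sqnorm x.
Proof. unfold sqnorm; autorewrite with inner; ring. Qed.

Lemma sqnorm_sub_sym x y : sqnorm (hsub x y) = sqnorm (hsub y x).
Proof. unfold sqnorm; autorewrite with inner; ring. Qed.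

Lemma hsub_diag x : hsub x x = hzero.
Proof. vring. Qed.

Lemma cauchy_schwarz x y : (hinner x y)^2 <= sqnorm x * sqnorm y.
Proof.
  destruct (Req_dec (sqnorm y) 0) as [H0|H0].
  - apply sqnorm_eq0 in H0; subst y; unfold sqnorm; autorewrite with inner; nra.
  - assert (Hp : 0 < sqnorm y) by (pose proof (sqnorm_ge0 y); lra).
    pose proof (sqnorm_ge0 (hsub (hscal (sqnorm y) x) (hscal (hinner x y) y))) as H.
    unfold sqnorm in *; autorewrite with inner in H.
    rewrite (hinner_sym y x) in H. nra.
Qed.

Lemma hnorm_ge0 x : 0 <= hnorm x.
Proof. apply sqrt_pos. Qed.

Lemma hnorm_sqr x : hnorm x * hnorm x = sqnorm x.
Proof. apply sqrt_sqrt, sqnorm_ge0. Qed.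

Lemma hnorm_0 : hnorm (@hzero X) = 0.
Proof. unfold hnorm; rewrite inner_0_l; apply sqrt_0. Qed.

Lemma hnorm_eq0 x : hnorm x = 0 -> x = hzero.
Proof. intro H; apply sqnorm_eq0; rewrite <- hnorm_sqr, H; ring. Qed.

Lemma hnorm_le_sqnorm x y : hnorm x <= hnorm y <-> sqnorm x <= sqnorm y.
Proof.
  split; intro H.
  - rewrite <- !hnorm_sqr. pose proof (hnorm_ge0 x). apply Rmult_le_compat; auto.
  - apply sqrt_le_1_alt; auto.
Qed.

Lemma hnorm_le_of_sqnorm x b : 0 <= b -> sqnorm x <= b * b -> hnorm x <= b.
Proof.
  intros Hb H. unfold hnorm. rewrite <- (sqrt_square b) by auto. apply sqrt_le_1_alt; auto.
Qed.

Lemma hnorm_lt_of_sqnorm x b : 0 < b -> sqnorm x < b * b -> hnorm x < b.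
Proof.
  intros Hb H. unfold hnorm. rewrite <- (sqrt_square b) by lra.
  apply sqrt_lt_1_alt; split; auto; apply sqnorm_ge0.
Qed.

Lemma sqnorm_le_of_hnorm x b : hnorm x <= b -> sqnorm x <= b * b.
Proof.
  intro H. rewrite <- hnorm_sqr. pose proof (hnorm_ge0 x). apply Rmult_le_compat; auto.
Qed.

Lemma inner_le_hnorm x y : hinner x y <= hnorm x * hnorm y.
Proof.
  pose proof (cauchy_schwarz x y) as H. rewrite <- !hnorm_sqr in H.
  pose proof (hnorm_ge0 x); pose proof (hnorm_ge0 y).
  assert (0 <= hnorm x * hnorm y) by nra. nra.
Qed.

Lemma hnorm_opp x : hnorm (hopp x) = hnorm x.
Proof. unfold hnorm; f_equal; autorewrite with inner; ring. Qed.

Lemma abs_inner_le_hnorm x y : Rabs (hinner x y) <= hnorm x * hnorm y.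
Proof.
  apply Rabs_le; split; [|apply inner_le_hnorm].
  pose proof (inner_le_hnorm (hopp x) y) as H.
  rewrite inner_opp_l, hnorm_opp in H; lra.
Qed.

Lemma hnorm_triangle x y : hnorm (hadd x y) <= hnorm x + hnorm y.
Proof.
  pose proof (hnorm_ge0 x); pose proof (hnorm_ge0 y); pose proof (inner_le_hnorm x y).
  apply hnorm_le_of_sqnorm; [lra|].
  rewrite sqnorm_add, <- !hnorm_sqr; nra.
Qed.

Lemma hnorm_scal a x : hnorm (hscal a x) = Rabs a * hnorm x.
Proof.
  unfold hnorm. replace (hinner (hscal a x) (hscal a x)) with ((a * a) * hinner x x)
    by (autorewrite with inner; ring).
  rewrite sqrt_mult_alt by nra. f_equal. apply sqrt_Rsqr_abs.
Qed.

Lemma hnorm_sub_sym x y : hnorm (hsub x y) = hnorm (hsub y x).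
Proof. unfold hnorm; f_equal; apply sqnorm_sub_sym. Qed.

Lemma hnorm_sub_triangle x y z : hnorm (hsub x z) <= hnorm (hsub x y) + hnorm (hsub y z).
Proof.
  replace (hsub x z) with (hadd (hsub x y) (hsub y z)) by vring. apply hnorm_triangle.
Qed.

End Norm.

Lemma inv_succ_small (eps : R) : eps > 0 -> exists N : nat, forall n, (n >= N)%nat -> / INR (S n) < eps.
Proof.
  intros He. destruct (INR_archimed eps 1 He) as [N HN].
  exists N. intros n Hn.
  assert (HI : INR N <= INR n) by (apply le_INR; lia).
  rewrite S_INR. assert (0 < INR n + 1) by (pose proof (pos_INR n); lra).
  apply (Rmult_lt_reg_l (INR n + 1)); auto. rewrite Rinv_r by lra. nra.
Qed.

Lemma half_pow_small (eps : R) : eps > 0 -> exists K : nat, forall n, (n >= K)%nat -> (/2)^n < eps.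
Proof.
  intros He. destruct (pow_lt_1_zero (/2)) with (y := eps) as [K HK]; auto.
  { rewrite Rabs_right; lra. }
  exists K. intros n Hn. pose proof (HK n Hn) as H. rewrite Rabs_right in H; auto.
  apply Rle_ge, pow_le; lra.
Qed.

Section Limits.
Context {X : HilbertSpace}.
Implicit Types x y z l : X.

Lemma converges_const x : converges (fun _ => x) x.
Proof. intros eps He. exists 0%nat. intros n _. rewrite hsub_diag, hnorm_0. lra. Qed.

Lemma converges_add u w l (k : X) : converges u l -> converges w k ->
  converges (fun n => hadd (u n) (w n)) (hadd l k).
Proof.
  intros Hu Hw eps He.
  destruct (Hu (eps / 2)) as [N1 H1]; [lra|]. destruct (Hw (eps / 2)) as [N2 H2]; [lra|].
  exists (N1 + N2)%nat. intros n Hn.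
  replace (hsub (hadd (u n) (w n)) (hadd l k)) with (hadd (hsub (u n) l) (hsub (w n) k)) by vring.
  pose proof (H1 n ltac:(lia)). pose proof (H2 n ltac:(lia)).
  pose proof (hnorm_triangle (hsub (u n) l) (hsub (w n) k)). lra.
Qed.

Lemma converges_scal a u l : converges u l -> converges (fun n => hscal a (u n)) (hscal a l).
Proof.
  intros Hu eps He. pose proof (Rabs_pos a).
  destruct (Hu (eps / (Rabs a + 1))) as [N HN]; [apply Rdiv_lt_0_compat; lra|].
  exists N. intros n Hn.
  replace (hsub (hscal a (u n)) (hscal a l)) with (hscal a (hsub (u n) l)) by vring.
  rewrite hnorm_scal. pose proof (HN n Hn). pose proof (hnorm_ge0 (hsub (u n) l)).
  assert (Rabs a * hnorm (hsub (u n) l) <= Rabs a * (eps / (Rabs a + 1)))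
    by (apply Rmult_le_compat_l; lra).
  assert (Rabs a * (eps / (Rabs a + 1)) < eps).
  { apply (Rmult_lt_reg_r (Rabs a + 1)); [lra|].
    replace (Rabs a * (eps / (Rabs a + 1)) * (Rabs a + 1)) with (Rabs a * eps) by (field; lra).
    nra. }
  lra.
Qed.

Lemma converges_geometric u l (C : R) : (forall n, hnorm (hsub (u n) l) <= C * (/2)^n) ->
  converges u l.
Proof.
  intros Hb eps He.
  pose proof (Rabs_pos C).
  destruct (half_pow_small (eps / (Rabs C + 1))) as [K HK]; [apply Rdiv_lt_0_compat; lra|].
  exists K. intros n Hn. pose proof (HK n Hn). pose proof (Hb n).
  pose proof (Rabs_pos C). pose proof (Rle_abs C). pose proof (pow_le (/2) n ltac:(lra)).
  assert (C * (/2)^n <= (Rabs C + 1) * (/2)^n) by nra.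
  assert ((Rabs C + 1) * (/2)^n < (Rabs C + 1) * (eps / (Rabs C + 1))) by (apply Rmult_lt_compat_l; lra).
  replace ((Rabs C + 1) * (eps / (Rabs C + 1))) with eps in * by (field; lra). lra.
Qed.

Lemma inner_limit_0 (u : nat -> X) l r : converges u l -> (forall n, hinner (u n) r = 0) ->
  hinner l r = 0.
Proof.
  intros Hc H0. apply NNPP. intro Hne.
  assert (Hpos : 0 < Rabs (hinner l r)) by (apply Rabs_pos_lt; auto).
  pose proof (hnorm_ge0 r).
  destruct (Hc (Rabs (hinner l r) / (hnorm r + 1))) as [N HN]; [apply Rdiv_lt_0_compat; lra|].
  pose proof (HN N (le_n N)) as HNN.
  assert (E : Rabs (hinner l r) = Rabs (hinner (hsub (u N) l) r))
    by (rewrite inner_sub_l, H0, Rminus_0_l, Rabs_Ropp; auto).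
  pose proof (abs_inner_le_hnorm (hsub (u N) l) r). pose proof (hnorm_ge0 (hsub (u N) l)).
  assert (hnorm (hsub (u N) l) * hnorm r
          <= Rabs (hinner l r) / (hnorm r + 1) * hnorm r) by (apply Rmult_le_compat_r; lra).
  assert (Rabs (hinner l r) / (hnorm r + 1) * hnorm r < Rabs (hinner l r)).
  { apply (Rmult_lt_reg_r (hnorm r + 1)); [lra|].
    replace (Rabs (hinner l r) / (hnorm r + 1) * hnorm r * (hnorm r + 1))
      with (Rabs (hinner l r) * hnorm r) by (field; lra). nra. }
  lra.
Qed.

Lemma complete_tail_bound (u : nat -> X) (b : nat -> R) :
  (forall k j, (j >= k)%nat -> hnorm (hsub (u j) (u k)) <= b k) ->
  (forall eps, eps > 0 -> exists K, b K < eps) ->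
  exists l, converges u l /\ forall k, hnorm (hsub l (u k)) <= b k.
Proof.
  intros Hb Hsm.
  destruct (hcomplete u) as [l Hl].
  { intros eps He. destruct (Hsm (eps/2) ltac:(lra)) as [K HK].
    exists K. intros m n Hm Hn. change (hnorm (hsub (u m) (u n)) < eps).
    pose proof (Hb K m Hm). pose proof (Hb K n Hn).
    pose proof (hnorm_sub_triangle (u m) (u K) (u n)).
    rewrite (hnorm_sub_sym (u K) (u n)) in *. lra. }
  exists l. split; [exact Hl|].
  intro k. apply Rnot_lt_le. intro Hlt.
  destruct (Hl (hnorm (hsub l (u k)) - b k) ltac:(lra)) as [K HK].
  pose proof (HK (K + k)%nat ltac:(lia)) as H1.
  change (hnorm (hsub (u (K + k)%nat) l) < hnorm (hsub l (u k)) - b k) in H1.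
  pose proof (Hb k (K + k)%nat ltac:(lia)).
  pose proof (hnorm_sub_triangle l (u (K + k)%nat) (u k)).
  rewrite hnorm_sub_sym in H1. lra.
Qed.

Lemma closure_incl (A : X -> Prop) a : A a -> closure A a.
Proof. intro Ha. exists (fun _ => a). split; auto. apply converges_const. Qed.

Lemma closure_id (A : X -> Prop) : is_closed A -> closure A = A.
Proof.
  intro HA. apply functional_extensionality; intro a. apply propositional_extensionality.
  split; [intros [u [Hu Hc]]; exact (HA u a Hu Hc)|apply closure_incl].
Qed.

Lemma closure_affine (A : X -> Prop) : is_affine A -> is_affine (closure A).
Proof.
  intros HA x y t [u [Hu Hux]] [w [Hw Hwy]].
  exists (fun n => hadd (hscal t (u n)) (hscal (1 - t) (w n))). split.
  - intro n. apply HA; auto.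
  - apply converges_add; apply converges_scal; auto.
Qed.

End Limits.

Section NearestPoint.
Context {X : HilbertSpace}.
Implicit Types x y z : X.

Lemma affine_seg (A : X -> Prop) p c t : is_affine A -> A p -> A c ->
  A (hadd p (hscal t (hsub c p))).
Proof.
  intros HA Hp Hc. replace (hadd p (hscal t (hsub c p))) with
    (hadd (hscal t c) (hscal (1 - t) p)) by vring. apply HA; auto.
Qed.

Lemma affine_add_sub (A : X -> Prop) a b c : is_affine A -> A a -> A b -> A c ->
  A (hadd a (hsub b c)).
Proof.
  intros HA Ha Hb Hc.
  assert (Hm : A (hadd (hscal (1/2) a) (hscal (1 - 1/2) b))) by (apply HA; auto).
  replace (hadd a (hsub b c)) with
    (hadd (hscal 2 (hadd (hscal (1/2) a) (hscal (1 - 1/2) b))) (hscal (1 - 2) c))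
    by (apply eq_of_inner_sub; autorewrite with inner; field).
  apply HA; auto.
Qed.

(* A quadratic [- 2 t a + t^2 b] that is nonnegative for all [t] has [a = 0]. *)
Lemma nearest_orth (A : X -> Prop) x p : is_affine A -> A p ->
  (forall c, A c -> sqnorm (hsub x p) <= sqnorm (hsub x c)) ->
  forall c, A c -> hinner (hsub x p) (hsub c p) = 0.
Proof.
  intros HA Hp Hmin c Hc.
  set (a := hinner (hsub x p) (hsub c p)). set (b := sqnorm (hsub c p)).
  assert (Hq : forall t, 0 <= - 2 * t * a + t * t * b).
  { intro t. pose proof (Hmin _ (affine_seg A p c t HA Hp Hc)) as H.
    replace (hsub x (hadd p (hscal t (hsub c p)))) with
      (hsub (hsub x p) (hscal t (hsub c p))) in H by vring.
    rewrite (sqnorm_sub (hsub x p)), sqnorm_scal, inner_scal_r in H. unfold a, b. nra. }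
  assert (Hb : 0 <= b) by apply sqnorm_ge0.
  pose proof (Hq (a / (b + 1))) as H.
  replace (- 2 * (a / (b + 1)) * a + a / (b + 1) * (a / (b + 1)) * b)
    with (- (a * a) * (b + 2) / ((b + 1) * (b + 1))) in H by (field; lra).
  assert (H2 : 0 <= - (a * a) * (b + 2)).
  { apply (Rmult_le_compat_r ((b + 1) * (b + 1))) in H; [|nra].
    unfold Rdiv in H. rewrite Rmult_assoc, Rinv_l in H by nra. lra. }
  nra.
Qed.

Definition nearest (C : X -> Prop) x p : Prop :=
  C p /\ forall c, C c -> hnorm (hsub x p) <= hnorm (hsub x c).

Lemma proj_nearest (C : X -> Prop) x : (exists p, nearest C x p) -> nearest C x (proj C x).
Proof. intro H. unfold proj. apply epsilon_spec, H. Qed.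

Lemma proj_eq (C : X -> Prop) x p : C p ->
  (forall c, C c -> hinner (hsub x p) (hsub c p) = 0) -> proj C x = p.
Proof.
  intros Hp Ho.
  assert (Hn : nearest C x p).
  { split; auto. intros c Hc. apply hnorm_le_sqnorm.
    pose proof (Ho c Hc). pose proof (sqnorm_ge0 (hsub c p)).
    replace (hsub x c) with (hsub (hsub x p) (hsub c p)) by vring.
    rewrite (sqnorm_sub (hsub x p)). lra. }
  destruct (proj_nearest C x (ex_intro _ p Hn)) as [Hq Hq2].
  set (q := proj C x) in *.
  pose proof (Hq2 p Hp) as H1. apply hnorm_le_sqnorm in H1.
  pose proof (Ho q Hq) as H2.
  replace (hsub x q) with (hsub (hsub x p) (hsub q p)) in H1 by vring.
  rewrite (sqnorm_sub (hsub x p)) in H1.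
  symmetry. apply eq_of_inner_sub. change (sqnorm (hsub p q) = 0).
  rewrite sqnorm_sub_sym. pose proof (sqnorm_ge0 (hsub q p)). lra.
Qed.

Lemma sqdist_inf (A : X -> Prop) x : (exists a, A a) ->
  exists d, (forall a, A a -> d <= sqnorm (hsub x a)) /\
    forall eps, eps > 0 -> exists a, A a /\ sqnorm (hsub x a) < d + eps.
Proof.
  intros [a0 Ha0].
  set (E := fun r => exists a, A a /\ r = - sqnorm (hsub x a)).
  destruct (completeness E) as [m [Hub Hleast]].
  - exists 0. intros r [a [_ ->]]. pose proof (sqnorm_ge0 (hsub x a)). lra.
  - exists (- sqnorm (hsub x a0)), a0; auto.
  - exists (- m). split.
    + intros a Ha. assert (E (- sqnorm (hsub x a))) by (exists a; auto).
      apply Hub in H. lra.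
    + intros eps He. apply NNPP. intro Hn.
      assert (Hb : is_upper_bound E (m - eps)).
      { intros r [a [Ha ->]]. apply Rnot_lt_le. intro Hlt. apply Hn. exists a. split; auto; lra. }
      apply Hleast in Hb. lra.
Qed.

(* Parallelogram law at the midpoint of two near-minimizers. *)
Lemma near_minimizers_close (A : X -> Prop) x d a b e1 e2 : is_affine A ->
  (forall c, A c -> d <= sqnorm (hsub x c)) -> A a -> A b ->
  sqnorm (hsub x a) < d + e1 -> sqnorm (hsub x b) < d + e2 ->
  sqnorm (hsub a b) <= 2 * e1 + 2 * e2.
Proof.
  intros HA Hd Ha Hb H1 H2.
  pose proof (Hd _ (HA a b (1/2) Ha Hb)) as Hm.
  replace (sqnorm (hsub x (hadd (hscal (1/2) a) (hscal (1 - 1/2) b)))) with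
    ((2 * sqnorm (hsub x a) + 2 * sqnorm (hsub x b) - sqnorm (hsub a b)) / 4) in Hm.
  - lra.
  - unfold sqnorm; autorewrite with inner.
    rewrite (hinner_sym a x), (hinner_sym b x), (hinner_sym b a). field.
Qed.

Lemma nearest_closure_exists (A : X -> Prop) x : (exists a, A a) -> is_affine A ->
  exists p, nearest (closure A) x p.
Proof.
  intros Hne HA. destruct (sqdist_inf A x Hne) as [d [Hd1 Hd2]].
  assert (Hseq : forall n : nat, exists a, A a /\ sqnorm (hsub x a) < d + / INR (S n)).
  { intro n. apply Hd2, Rinv_0_lt_compat, lt_0_INR; lia. }
  destruct (choice _ Hseq) as [u Hu].
  destruct (hcomplete u) as [l Hl]; [|change (converges u l) in Hl].
  { intros eps He.
    destruct (inv_succ_small (eps * eps / 4)) as [N HN]; [nra|].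
    exists N. intros n m Hn Hm. change (hnorm (hsub (u n) (u m)) < eps).
    apply hnorm_lt_of_sqnorm; auto.
    pose proof (near_minimizers_close A x d (u n) (u m) _ _ HA Hd1
                  (proj1 (Hu n)) (proj1 (Hu m)) (proj2 (Hu n)) (proj2 (Hu m))).
    pose proof (HN n Hn). pose proof (HN m Hm). lra. }
  exists l. split; [exists u; split; [intro n; apply Hu|exact Hl]|].
  intros c [w [Hw Hwc]].
  apply Rnot_lt_le. intro Hlt.
  set (eps := (hnorm (hsub x l) - hnorm (hsub x c)) / 4).
  assert (He : eps > 0) by (unfold eps; lra).
  destruct (Hl eps He) as [N1 HN1]. destruct (Hwc eps He) as [N2 HN2].
  destruct (inv_succ_small (eps * eps)) as [N3 HN3]; [nra|].
  set (n := (N1 + N3)%nat).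
  pose proof (HN1 n ltac:(lia)) as H1. pose proof (HN2 N2 ltac:(lia)) as H2.
  pose proof (HN3 n ltac:(lia)) as H3. destruct (Hu n) as [_ H4].
  pose proof (Hd1 _ (Hw N2)) as H5.
  assert (H6 : hnorm (hsub x (u n)) < hnorm (hsub x (w N2)) + eps).
  { pose proof (hnorm_sqr (hsub x (w N2))). pose proof (hnorm_ge0 (hsub x (w N2))).
    apply hnorm_lt_of_sqnorm; nra. }
  pose proof (hnorm_sub_triangle x (u n) l). pose proof (hnorm_sub_triangle x c (w N2)).
  rewrite hnorm_sub_sym in H2. unfold eps in *. lra.
Qed.

Lemma proj_closure_spec (A : X -> Prop) x : (exists a, A a) -> is_affine A ->
  closure A (proj (closure A) x) /\
  forall c, closure A c -> hinner (hsub x (proj (closure A) x)) (hsub c (proj (closure A) x)) = 0.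
Proof.
  intros Hne HA.
  destruct (proj_nearest _ x (nearest_closure_exists A x Hne HA)) as [Hp Hmin].
  split; auto. apply nearest_orth; auto.
  - apply closure_affine; auto.
  - intros c Hc. apply hnorm_le_sqnorm; auto.
Qed.

Lemma closed_affine_proj (C : X -> Prop) x : closed_affine C ->
  C (proj C x) /\ forall c, C c -> hinner (hsub x (proj C x)) (hsub c (proj C x)) = 0.
Proof.
  intros [Hne [HA Hcl]]. pose proof (proj_closure_spec C x Hne HA) as H.
  rewrite closure_id in H; auto.
Qed.

Lemma closed_affine_proj_orth (C : X -> Prop) x c d : closed_affine C -> C c -> C d ->
  hinner (hsub x (proj C x)) (hsub c d) = 0.
Proof.
  intros HC Hc Hd. destruct (closed_affine_proj C x HC) as [_ H].
  pose proof (H c Hc). pose proof (H d Hd).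
  replace (hsub c d) with (hsub (hsub c (proj C x)) (hsub d (proj C x))) by vring.
  rewrite inner_sub_r. lra.
Qed.

End NearestPoint.

Record OrthProj (X : HilbertSpace) := {
  ospace : X -> Prop;
  oproj : X -> X;
  ospace0 : ospace hzero;
  ospaceD : forall a b, ospace a -> ospace b -> ospace (hadd a b);
  ospaceZ : forall t a, ospace a -> ospace (hscal t a);
  oproj_mem : forall y, ospace (oproj y);
  oproj_orth : forall y s, ospace s -> hinner (hsub y (oproj y)) s = 0
}.
Arguments ospace {X}. Arguments oproj {X}. Arguments ospace0 {X}. Arguments ospaceD {X}.
Arguments ospaceZ {X}. Arguments oproj_mem {X}. Arguments oproj_orth {X}.

Section OrthProjTheory.
Context {X : HilbertSpace} (L : OrthProj X).
Implicit Types a b s y w : X.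
Notation S := (ospace L).
Notation P := (oproj L).

Lemma ospaceB a b : S a -> S b -> S (hsub a b).
Proof.
  intros Ha Hb. replace (hsub a b) with (hadd a (hscal (-1) b)) by vring.
  apply ospaceD, ospaceZ; auto.
Qed.

Lemma oproj_unique y p : S p -> (forall s, S s -> hinner (hsub y p) s = 0) -> P y = p.
Proof.
  intros Hp Ho. apply eq_of_inner_sub.
  assert (He : S (hsub (P y) p)) by (apply ospaceB; auto; apply oproj_mem).
  replace (hinner (hsub (P y) p) (hsub (P y) p)) with
    (hinner (hsub (hsub y p) (hsub y (P y))) (hsub (P y) p)) by (f_equal; vring).
  rewrite inner_sub_l, Ho, oproj_orth; auto. ring.
Qed.

Lemma oproj_id s : S s -> P s = s.
Proof. intros Hs. apply oproj_unique; auto. intros s' _. rewrite hsub_diag, inner_0_l; auto. Qed.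

Lemma oprojD a b : P (hadd a b) = hadd (P a) (P b).
Proof.
  apply oproj_unique; [apply ospaceD; apply oproj_mem|].
  intros s Hs. replace (hsub (hadd a b) (hadd (P a) (P b))) with
    (hadd (hsub a (P a)) (hsub b (P b))) by vring.
  rewrite hinner_add_l, !oproj_orth; auto. ring.
Qed.

Lemma oprojZ t a : P (hscal t a) = hscal t (P a).
Proof.
  apply oproj_unique; [apply ospaceZ, oproj_mem|].
  intros s Hs. replace (hsub (hscal t a) (hscal t (P a))) with (hscal t (hsub a (P a))) by vring.
  rewrite hinner_scal_l, oproj_orth; auto. ring.
Qed.

Lemma oprojB a b : P (hsub a b) = hsub (P a) (P b).
Proof.
  replace (hsub a b) with (hadd a (hscal (-1) b)) by vring.
  rewrite oprojD, oprojZ. vring.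
Qed.

Lemma oproj0 : P hzero = hzero.
Proof. apply oproj_id, ospace0. Qed.

Lemma oproj_perp w : (forall s, S s -> hinner w s = 0) -> P w = hzero.
Proof.
  intros H. apply oproj_unique; [apply ospace0|].
  intros s Hs. replace (hsub w hzero) with w by vring. auto.
Qed.

Lemma inner_oproj_mem a s : S s -> hinner (P a) s = hinner a s.
Proof. intros Hs. pose proof (oproj_orth L a s Hs). rewrite inner_sub_l in H. lra. Qed.

Lemma oproj_sym a b : hinner (P a) b = hinner a (P b).
Proof.
  rewrite (hinner_sym (P a) b), <- (inner_oproj_mem b (P a)), <- (inner_oproj_mem a (P b))
    by apply oproj_mem.
  apply hinner_sym.
Qed.

Lemma coproj_sym a b : hinner (hsub a (P a)) b = hinner a (hsub b (P b)).
Proof. rewrite inner_sub_l, inner_sub_r, oproj_sym. ring. Qed.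

Lemma oproj_coproj a : P (hsub a (P a)) = hzero.
Proof. apply oproj_perp. intros s Hs. apply oproj_orth; auto. Qed.

Lemma oproj_pythagoras y : sqnorm y = sqnorm (P y) + sqnorm (hsub y (P y)).
Proof.
  replace y with (hadd (P y) (hsub y (P y))) at 1 by vring.
  rewrite sqnorm_add, (hinner_sym (P y)), oproj_orth by apply oproj_mem. ring.
Qed.

Lemma oproj_le y : sqnorm (P y) <= sqnorm y.
Proof. rewrite (oproj_pythagoras y). pose proof (sqnorm_ge0 (hsub y (P y))). lra. Qed.

Lemma coproj_le y : sqnorm (hsub y (P y)) <= sqnorm y.
Proof. rewrite (oproj_pythagoras y). pose proof (sqnorm_ge0 (P y)). lra. Qed.

End OrthProjTheory.

Section ParallelSubspace.
Context {X : HilbertSpace}.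
Implicit Types x y z e : X.

Lemma par_add_mem (C : X -> Prop) z e : is_affine C -> C z -> par C e -> C (hadd z e).
Proof. intros HA Hz [a [b [Ha [Hb ->]]]]. apply affine_add_sub; auto. Qed.

Lemma par_of_mem (C : X -> Prop) z e : C z -> C (hadd z e) -> par C e.
Proof. intros Hz He. exists (hadd z e), z. repeat split; auto. vring. Qed.

Lemma par_closed (C : X -> Prop) : closed_affine C -> is_closed (par C).
Proof.
  intros [[z Hz] [HA Hcl]] u l Hu Hc. apply (par_of_mem C z); auto.
  apply (Hcl (fun n => hadd z (u n))); [intro n; apply par_add_mem; auto|].
  intros eps He. destruct (Hc eps He) as [N HN]. exists N. intros n Hn.
  replace (hsub (hadd z (u n)) (hadd z l)) with (hsub (u n) l) by vring. auto.
Qed.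

Lemma inner_proj_par (C : X -> Prop) y e : closed_affine C -> par C e ->
  hinner (proj C y) e = hinner y e.
Proof.
  intros HC [a [b [Ha [Hb ->]]]]. pose proof (closed_affine_proj_orth C y a b HC Ha Hb).
  rewrite inner_sub_l in H. lra.
Qed.

Lemma par_translate (v : X) (V : X -> Prop) : par (translate v V) = par V.
Proof.
  apply functional_extensionality; intro e. apply propositional_extensionality. split.
  - intros [a [b [[w1 [H1 ->]] [[w2 [H2 ->]] ->]]]]. exists w1, w2. repeat split; auto. vring.
  - intros [a [b [Ha [Hb ->]]]]. exists (hadd v a), (hadd v b).
    split; [exists a; auto|]. split; [exists b; auto|]. vring.
Qed.

Section ParProj.
Variables (C : X -> Prop) (HC : closed_affine C).

Let HA : is_affine C := proj1 (proj2 HC).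
Let Hz : C (proj C hzero) := proj1 (closed_affine_proj C hzero HC).

Lemma par0 : par C hzero.
Proof. exists (proj C hzero), (proj C hzero). repeat split; auto. vring. Qed.

Lemma parD a b : par C a -> par C b -> par C (hadd a b).
Proof.
  intros [a1 [a2 [Ha1 [Ha2 ->]]]] [b1 [b2 [Hb1 [Hb2 ->]]]].
  exists (hadd a1 (hsub b1 b2)), a2. repeat split; [apply affine_add_sub; auto|auto|vring].
Qed.

Lemma parZ t a : par C a -> par C (hscal t a).
Proof.
  intros [a1 [a2 [Ha1 [Ha2 ->]]]].
  exists (hadd a2 (hscal t (hsub a1 a2))), a2. repeat split; [apply affine_seg; auto|auto|vring].
Qed.

(* [proj C] is affine with linear part [y |-> proj C y - proj C 0]. *)
Definition par_proj_fun (y : X) : X := hsub (proj C y) (proj C hzero).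

Lemma par_proj_mem y : par C (par_proj_fun y).
Proof. exists (proj C y), (proj C hzero). repeat split; auto. apply (closed_affine_proj C y HC). Qed.

Lemma par_proj_orth y s : par C s -> hinner (hsub y (par_proj_fun y)) s = 0.
Proof.
  intros [a [b [Ha [Hb ->]]]]. unfold par_proj_fun.
  replace (hsub y (hsub (proj C y) (proj C hzero))) with
    (hsub (hsub y (proj C y)) (hsub hzero (proj C hzero))) by vring.
  rewrite inner_sub_l, !closed_affine_proj_orth; auto. ring.
Qed.

Definition par_proj : OrthProj X :=
  {| ospace := par C; oproj := par_proj_fun;
     ospace0 := par0; ospaceD := parD; ospaceZ := parZ;
     oproj_mem := par_proj_mem; oproj_orth := par_proj_orth |}.

Lemma proj_par_proj y1 y2 : proj C y1 = hadd (proj C y2) (oproj par_proj (hsub y1 y2)).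
Proof. rewrite oprojB. simpl. unfold par_proj_fun. vring. Qed.

End ParProj.
End ParallelSubspace.

Section LinearDR.
Context {X : HilbertSpace} (M N : OrthProj X).
Implicit Types a b y f g : X.
Notation PM := (oproj M).
Notation PN := (oproj N).

Definition DRl (y : X) : X := hadd (hsub y (PM y)) (PN (hsub (hscal 2 (PM y)) y)).

Lemma DRl_decomp y : DRl y = hadd (PN (PM y)) (hsub (hsub y (PM y)) (PN (hsub y (PM y)))).
Proof.
  unfold DRl. replace (hsub (hscal 2 (PM y)) y) with (hsub (PM y) (hsub y (PM y))) by vring.
  rewrite (oprojB N). vring.
Qed.

Lemma DRl_comb (s t : R) a b :
  DRl (hadd (hscal s a) (hscal t b)) = hadd (hscal s (DRl a)) (hscal t (DRl b)).
Proof.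
  unfold DRl. rewrite (oprojD M), !(oprojZ M).
  replace (hsub (hscal 2 (hadd (hscal s (PM a)) (hscal t (PM b)))) (hadd (hscal s a) (hscal t b)))
    with (hadd (hscal s (hsub (hscal 2 (PM a)) a)) (hscal t (hsub (hscal 2 (PM b)) b))) by vring.
  rewrite (oprojD N), !(oprojZ N). vring.
Qed.

Lemma DRlD a b : DRl (hadd a b) = hadd (DRl a) (DRl b).
Proof.
  replace (hadd a b) with (hadd (hscal 1 a) (hscal 1 b)) by vring. rewrite DRl_comb. vring.
Qed.

Lemma DRlB a b : DRl (hsub a b) = hsub (DRl a) (DRl b).
Proof.
  replace (hsub a b) with (hadd (hscal 1 a) (hscal (-1) b)) by vring. rewrite DRl_comb. vring.
Qed.

Lemma DRl0 : DRl hzero = hzero.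
Proof. replace (@hzero X) with (hsub (@hzero X) hzero) by vring. rewrite DRlB. vring. Qed.

Lemma sqnorm_DRl y :
  sqnorm (DRl y) = sqnorm (PN (PM y)) + sqnorm (hsub (hsub y (PM y)) (PN (hsub y (PM y)))).
Proof.
  rewrite DRl_decomp, sqnorm_add, (hinner_sym (PN (PM y))), oproj_orth by apply oproj_mem.
  ring.
Qed.

Lemma DRl_nonexp y : sqnorm (DRl y) <= sqnorm y.
Proof.
  rewrite sqnorm_DRl, (oproj_pythagoras M y).
  pose proof (oproj_le N (PM y)). pose proof (coproj_le N (hsub y (PM y))). lra.
Qed.

Lemma DRl_firm y : hinner (DRl y) y = sqnorm (DRl y).
Proof.
  rewrite sqnorm_DRl, DRl_decomp.
  set (p := PM y). set (q := hsub y p).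
  assert (Ey : y = hadd p q) by (unfold q; vring).
  assert (Hpq : hinner q p = 0) by (unfold q, p; apply oproj_orth, oproj_mem).
  assert (H1 : hinner (PN p) p = sqnorm (PN p)).
  { rewrite hinner_sym, <- (inner_oproj_mem N p (PN p)) by apply oproj_mem. auto. }
  assert (H2 : hinner (hsub q (PN q)) q = sqnorm (hsub q (PN q))).
  { pose proof (oproj_orth N q (PN q) (oproj_mem N q)) as H.
    unfold sqnorm. rewrite (inner_sub_r q (PN q)). lra. }
  assert (H3 : hinner (PN p) q = hinner p (PN q)) by apply oproj_sym.
  assert (H4 : hinner (hsub q (PN q)) p = - hinner p (PN q))
    by (rewrite inner_sub_l, Hpq, (hinner_sym (PN q) p); ring).
  rewrite Ey at 1. rewrite hinner_add_l, !inner_add_r. lra.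
Qed.

Lemma sqnorm_sub_DRl y : sqnorm (hsub y (DRl y)) = sqnorm y - sqnorm (DRl y).
Proof. rewrite sqnorm_sub, (hinner_sym y), DRl_firm. ring. Qed.

Lemma DRl_fixP y : DRl y = y <-> PN (PM y) = PM y /\ PN (hsub y (PM y)) = hzero.
Proof.
  split; [intro Hf|intros [H1 H2]; rewrite DRl_decomp, H1, H2; vring].
  assert (E : sqnorm (DRl y) = sqnorm y) by (rewrite Hf; auto).
  rewrite sqnorm_DRl, (oproj_pythagoras M y) in E.
  pose proof (oproj_pythagoras N (PM y)). pose proof (oproj_pythagoras N (hsub y (PM y))).
  pose proof (sqnorm_ge0 (hsub (PM y) (PN (PM y)))).
  pose proof (sqnorm_ge0 (PN (hsub y (PM y)))).
  split.
  - symmetry. apply eq_of_inner_sub. change (sqnorm (hsub (PM y) (PN (PM y))) = 0). lra.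
  - apply sqnorm_eq0. lra.
Qed.

Lemma DRl_fix_of_mem e : ospace M e -> ospace N e -> DRl e = e.
Proof.
  intros HM HN. apply DRl_fixP. rewrite !(oproj_id M e HM), (oproj_id N e HN), hsub_diag.
  split; auto. apply oproj0.
Qed.

Lemma DRl_fix_of_perp b : (forall m, ospace M m -> hinner b m = 0) ->
  (forall n, ospace N n -> hinner b n = 0) -> DRl b = b.
Proof.
  intros HM HN. apply DRl_fixP. rewrite (oproj_perp M b HM), oproj0.
  replace (hsub b hzero) with b by vring. split; auto. apply oproj_perp; auto.
Qed.

Lemma DRl_adjoint_fix f g : DRl f = f -> hinner (DRl g) f = hinner g f.
Proof.
  intros Hf. destruct (proj1 (DRl_fixP f) Hf) as [Ha Hb].
  set (a := PM f) in *. set (b := hsub f a) in *.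
  assert (Ef : f = hadd a b) by (unfold b; vring).
  assert (HMa : PM a = a) by (apply oproj_id, oproj_mem).
  assert (HMb : PM b = hzero) by apply oproj_coproj.
  rewrite DRl_decomp, Ef, hinner_add_l, !inner_add_r.
  rewrite (oproj_sym N (PM g) a), Ha, (oproj_sym M g a), HMa.
  rewrite (oproj_sym N (PM g) b), Hb, inner_0_r.
  rewrite (coproj_sym N (hsub g (PM g)) a), Ha, hsub_diag, inner_0_r.
  rewrite (coproj_sym N (hsub g (PM g)) b), Hb.
  replace (hsub b hzero) with b by vring.
  rewrite (coproj_sym M g b), HMb. replace (hsub b hzero) with b by vring. ring.
Qed.

Lemma DRl_fix_of_perp_ran w : (forall d, hinner w (hsub d (DRl d)) = 0) -> DRl w = w.
Proof.
  intros H. pose proof (H w) as Hw. rewrite inner_sub_r in Hw.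
  pose proof (DRl_firm w) as Hf. rewrite hinner_sym in Hf.
  apply eq_of_inner_sub. change (sqnorm (hsub (DRl w) w) = 0).
  rewrite sqnorm_sub, (hinner_sym (DRl w) w). unfold sqnorm in *. lra.
Qed.

(* [PM v] lies in [M ∩ N], so it is orthogonal to [v], hence vanishes. *)
Lemma DRl_fix_perp v : DRl v = v -> orth_compl (inter (ospace M) (ospace N)) v ->
  orth_compl (ospace M) v /\ orth_compl (ospace N) v.
Proof.
  intros Hfix Hperp. destruct (proj1 (DRl_fixP v) Hfix) as [Ha Hb].
  assert (Ha0 : PM v = hzero).
  { apply sqnorm_eq0. unfold sqnorm.
    replace (hinner (PM v) (PM v)) with (hinner v (PM v) - hinner (hsub v (PM v)) (PM v))
      by (rewrite inner_sub_l; ring).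
    rewrite Hperp, oproj_orth;
      [ring|apply oproj_mem|split; [apply oproj_mem|rewrite <- Ha; apply oproj_mem]]. }
  rewrite Ha0 in Hb. replace (hsub v hzero) with v in Hb by vring.
  split; intros s Hs.
  - rewrite <- (inner_oproj_mem M v s Hs), Ha0. apply inner_0_l.
  - rewrite <- (inner_oproj_mem N v s Hs), Hb. apply inner_0_l.
Qed.

Lemma iter_DRlD n a b : Nat.iter n DRl (hadd a b) = hadd (Nat.iter n DRl a) (Nat.iter n DRl b).
Proof. induction n; simpl; auto. rewrite IHn. apply DRlD. Qed.

Lemma iter_DRlB n a b : Nat.iter n DRl (hsub a b) = hsub (Nat.iter n DRl a) (Nat.iter n DRl b).
Proof. induction n; simpl; auto. rewrite IHn. apply DRlB. Qed.

Lemma iter_DRl_nonexp n y : sqnorm (Nat.iter n DRl y) <= sqnorm y.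
Proof. induction n; simpl; [lra|]. pose proof (DRl_nonexp (Nat.iter n DRl y)). lra. Qed.

Lemma iter_DRl_fix n f : DRl f = f -> Nat.iter n DRl f = f.
Proof. intros Hf. induction n; simpl; auto. rewrite IHn; auto. Qed.

Lemma iter_DRl_perp_fix n g : (forall f, DRl f = f -> hinner g f = 0) ->
  forall f, DRl f = f -> hinner (Nat.iter n DRl g) f = 0.
Proof. intros Hg. induction n; intros f Hf; simpl; auto. rewrite DRl_adjoint_fix; auto. Qed.

(* The steps [|T^k z - T^(k+1) z|^2] decrease and, by [sqnorm_sub_DRl],
   telescope against [|z|^2]. *)
Lemma asymptotic_regularity z n :
  INR (S n) * sqnorm (hsub (Nat.iter n DRl z) (Nat.iter (S n) DRl z)) <= sqnorm z.
Proof.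
  set (T := fun k => Nat.iter k DRl z).
  assert (Hstep : forall k, sqnorm (hsub (T k) (T (S k))) = sqnorm (T k) - sqnorm (T (S k)))
    by (intro k; apply sqnorm_sub_DRl).
  assert (Hmono : forall k, sqnorm (hsub (T (S k)) (T (S (S k)))) <= sqnorm (hsub (T k) (T (S k)))).
  { intro k. unfold T. simpl. rewrite <- DRlB. apply DRl_nonexp. }
  assert (Hind : forall n, INR (S n) * sqnorm (hsub (T n) (T (S n))) + sqnorm (T (S n)) <= sqnorm z).
  { induction n0.
    - simpl INR. rewrite Hstep. unfold T; simpl. lra.
    - rewrite S_INR. pose proof (Hmono n0). pose proof (Hstep (S n0)).
      pose proof (sqnorm_ge0 (hsub (T (S n0)) (T (S (S n0))))). pose proof (pos_INR (S n0)).
      assert (INR (S n0) * sqnorm (hsub (T (S n0)) (T (S (S n0))))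
              <= INR (S n0) * sqnorm (hsub (T n0) (T (S n0)))) by (apply Rmult_le_compat_l; auto).
      lra. }
  pose proof (Hind n). pose proof (sqnorm_ge0 (T (S n))). unfold T in *. lra.
Qed.

End LinearDR.

Section LinearDRConvergence.
Context {X : HilbertSpace} (M N : OrthProj X).
Implicit Types y f g : X.
Notation T := (DRl M N).
Notation ranT := (ran_Id_minus (DRl M N)).

Lemma ran_DRl_affine : is_affine ranT.
Proof.
  intros x y t [d1 ->] [d2 ->]. exists (hadd (hscal t d1) (hscal (1 - t) d2)).
  rewrite DRl_comb. vring.
Qed.

Lemma ran_DRl_ne : exists r, ranT r.
Proof. exists hzero, hzero. rewrite DRl0. vring. Qed.

Lemma closure_ran_perp_fix g : closure ranT g -> forall f, T f = f -> hinner g f = 0.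
Proof.
  intros [u [Hu Hc]] f Hf. apply (inner_limit_0 u); auto.
  intro n. destruct (Hu n) as [d ->]. rewrite inner_sub_l, DRl_adjoint_fix; auto. ring.
Qed.

Lemma fix_ran_decomp y : exists f g, y = hadd f g /\ T f = f /\ closure ranT g.
Proof.
  destruct (proj_closure_spec ranT y ran_DRl_ne ran_DRl_affine) as [Hp Ho].
  set (p := proj (closure ranT) y) in *.
  exists (hsub y p), p. split; [vring|]. split; auto.
  apply DRl_fix_of_perp_ran. intros d.
  assert (H1 : closure ranT hzero) by (apply closure_incl; exists hzero; rewrite DRl0; vring).
  assert (H2 : closure ranT (hsub d (T d))) by (apply closure_incl; exists d; auto).
  apply Ho in H1. apply Ho in H2. rewrite inner_sub_r in H1, H2. rewrite inner_0_r in H1. lra.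
Qed.

Lemma iter_DRl_ran_small d eps : eps > 0 ->
  exists K, forall n, (n >= K)%nat -> hnorm (Nat.iter n T (hsub d (T d))) < eps.
Proof.
  intros He. pose proof (sqnorm_ge0 d).
  destruct (inv_succ_small (eps * eps / (sqnorm d + 1))) as [K HK]; [apply Rdiv_lt_0_compat; nra|].
  exists K. intros n Hn. rewrite iter_DRlB, <- Nat.iter_succ_r.
  apply hnorm_lt_of_sqnorm; auto.
  pose proof (asymptotic_regularity M N d n). pose proof (HK n Hn).
  assert (HS : 0 < INR (S n)) by (apply lt_0_INR; lia).
  set (q := sqnorm (hsub (Nat.iter n T d) (Nat.iter (S n) T d))) in *.
  assert (q <= (sqnorm d + 1) * / INR (S n)).
  { apply (Rmult_le_reg_l (INR (S n))); auto.
    replace (INR (S n) * ((sqnorm d + 1) * / INR (S n))) with (sqnorm d + 1) by (field; lra).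
    lra. }
  assert ((sqnorm d + 1) * / INR (S n) < eps * eps).
  { replace (eps * eps) with ((sqnorm d + 1) * (eps * eps / (sqnorm d + 1))) by (field; lra).
    apply Rmult_lt_compat_l; lra. }
  lra.
Qed.

Lemma iter_DRl_closure_ran g : closure ranT g -> converges (fun n => Nat.iter n T g) hzero.
Proof.
  intros [u [Hu Hc]] eps He.
  destruct (Hc (eps / 2)) as [k Hk]; [lra|]. pose proof (Hk k (le_n k)) as Hgk.
  destruct (Hu k) as [d Hd].
  destruct (iter_DRl_ran_small d (eps / 2)) as [K HK]; [lra|].
  exists K. intros n Hn. replace (hsub (Nat.iter n T g) hzero) with
    (hadd (Nat.iter n T (hsub g (u k))) (Nat.iter n T (u k)))
    by (rewrite <- iter_DRlD; replace (hadd (hsub g (u k)) (u k)) with g by vring; vring).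
  eapply Rle_lt_trans; [apply hnorm_triangle|].
  assert (hnorm (Nat.iter n T (hsub g (u k))) <= hnorm (hsub (u k) g))
    by (rewrite hnorm_sub_sym; apply hnorm_le_sqnorm, iter_DRl_nonexp).
  rewrite <- Hd in HK. pose proof (HK n Hn). lra.
Qed.

End LinearDRConvergence.

Section Baire.
Context {X : HilbertSpace}.
Variables (Y : X -> Prop) (E : nat -> X -> Prop).
Hypothesis HYcl : is_closed Y.
Hypothesis HYcov : forall y, Y y -> exists k, E k y.

Definition adherent (A : X -> Prop) (y : X) : Prop :=
  forall eps, eps > 0 -> exists e, A e /\ hnorm (hsub y e) < eps.

(* [p] is a ball of centre [fst p] and radius [snd p] inside [Y ∩ B(y0, r/2)]
   whose double stays away from [E k]. *)
Definition baire_step (k : nat) (y0 : X) (r : R) (p : X * R) : Prop :=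
  Y (fst p) /\ 0 < snd p /\ snd p <= r / 2 /\ hnorm (hsub (fst p) y0) < r / 2 /\
  forall e, E k e -> 2 * snd p <= hnorm (hsub (fst p) e).

Lemma baire_step_exists :
  ~ (exists k y0 r, r > 0 /\ Y y0 /\ forall y, Y y -> hnorm (hsub y y0) < r -> adherent (E k) y) ->
  forall k y0 r, r > 0 -> Y y0 -> exists p, baire_step k y0 r p.
Proof.
  intros Hn k y0 r Hr Hy0. apply NNPP. intro Hno. apply Hn.
  exists k, y0, (r / 2). split; [lra|]. split; auto.
  intros y Hy Hyr eps He. apply NNPP. intro Hna.
  apply Hno. exists (y, Rmin (eps / 2) (r / 2)). unfold baire_step; simpl.
  split; auto. split; [apply Rmin_glb_lt; lra|]. split; [apply Rmin_r|]. split; auto.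
  intros e He'. apply Rnot_lt_le. intro Hlt. apply Hna. exists e. split; auto.
  pose proof (Rmin_l (eps / 2) (r / 2)). lra.
Qed.

(* Nested balls avoiding [E 0], [E 1], ... would converge to a point of [Y]
   lying in no [E k]. *)
Lemma baire_category (y_init : X) : Y y_init ->
  exists k y0 r, r > 0 /\ Y y0 /\ forall y, Y y -> hnorm (hsub y y0) < r -> adherent (E k) y.
Proof.
  intros Hinit. apply NNPP. intro Hn.
  pose proof (baire_step_exists Hn) as Hstep.
  set (next := fun k (q : X * R) => epsilon (inhabits (@hzero X, 0)) (baire_step k (fst q) (snd q))).
  set (sq := fix sq (k : nat) : X * R :=
         match k with O => (y_init, 1) | S k' => next k' (sq k') end).
  assert (Hinv : forall k, Y (fst (sq k)) /\ 0 < snd (sq k)).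
  { induction k as [|k [H1 H2]]; [simpl; split; auto; lra|].
    assert (HP : baire_step k (fst (sq k)) (snd (sq k)) (sq (S k)))
      by (simpl; unfold next; apply epsilon_spec, Hstep; auto).
    destruct HP as [A [B _]]. auto. }
  assert (HP : forall k, baire_step k (fst (sq k)) (snd (sq k)) (sq (S k)))
    by (intro k; simpl; unfold next; apply epsilon_spec, Hstep; apply Hinv).
  set (y := fun k => fst (sq k)). set (r := fun k => snd (sq k)).
  assert (Hr : forall k, 0 < r k) by (intro k; apply Hinv).
  assert (Hr2 : forall k, r (S k) <= r k / 2) by (intro k; apply (HP k)).
  assert (Hy2 : forall k, hnorm (hsub (y (S k)) (y k)) < r k / 2) by (intro k; apply (HP k)).
  assert (Hrpow : forall k, r k <= (/2)^k).
  { induction k; [unfold r; simpl; lra|]. simpl. pose proof (Hr2 k). lra. }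
  assert (HD : forall k i, hnorm (hsub (y (i + k)%nat) (y k)) <= r k - r (i + k)%nat).
  { intros k i. induction i; [simpl; rewrite hsub_diag, hnorm_0; lra|].
    simpl. pose proof (Hy2 (i + k)%nat). pose proof (Hr2 (i + k)%nat).
    pose proof (hnorm_sub_triangle (y (S (i + k))) (y (i + k)%nat) (y k)). lra. }
  destruct (complete_tail_bound y r) as [l [Hl Hlb]].
  { intros k j Hj. replace j with ((j - k) + k)%nat by lia. pose proof (HD k (j - k)%nat).
    pose proof (Hr ((j - k) + k)%nat). lra. }
  { intros eps He. destruct (half_pow_small eps He) as [K HK]. exists K.
    pose proof (Hrpow K). pose proof (HK K (le_n K)). lra. }
  assert (HYl : Y l) by (apply (HYcl y l); auto; intro k; apply Hinv).
  destruct (HYcov l HYl) as [j Hj].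
  destruct (HP j) as [_ [_ [_ [_ Hfar]]]].
  pose proof (Hfar l Hj) as H. fold (y (S j)) (r (S j)) in H.
  pose proof (Hlb (S j)). rewrite hnorm_sub_sym in H. pose proof (Hr (S j)). lra.
Qed.

End Baire.

Fixpoint partial_sum {X : HilbertSpace} (a : nat -> X) (n : nat) : X :=
  match n with O => hzero | S n' => hadd (partial_sum a n') (a n') end.

Lemma geometric_series {X : HilbertSpace} (L : OrthProj X) (a : nat -> X) (C : R) :
  is_closed (ospace L) -> (forall j, ospace L (a j)) -> (forall j, hnorm (a j) <= C * (/2)^j) ->
  exists s, ospace L s /\ converges (partial_sum a) s /\ hnorm s <= 2 * C.
Proof.
  intros Hcl Ha Hb.
  assert (HC : 0 <= C) by (pose proof (Hb 0%nat) as H; simpl in H; pose proof (hnorm_ge0 (a 0%nat)); lra).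
  assert (Htail : forall k i, hnorm (hsub (partial_sum a (i + k)) (partial_sum a k))
                              <= 2 * C * ((/2)^k - (/2)^(i + k))).
  { intro k. induction i; [simpl; rewrite hsub_diag, hnorm_0; lra|].
    simpl. replace (hsub (hadd (partial_sum a (i + k)) (a (i + k)%nat)) (partial_sum a k)) with
      (hadd (hsub (partial_sum a (i + k)) (partial_sum a k)) (a (i + k)%nat)) by vring.
    eapply Rle_trans; [apply hnorm_triangle|]. pose proof (Hb (i + k)%nat). lra. }
  destruct (complete_tail_bound (partial_sum a) (fun k => 2 * C * (/2)^k)) as [s [Hconv Hbd]].
  { intros k j Hj. replace j with ((j - k) + k)%nat by lia.
    pose proof (Htail k (j - k)%nat). pose proof (pow_le (/2) ((j - k) + k)%nat ltac:(lra)). nra. }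
  { intros eps He. destruct (half_pow_small (eps / (2 * C + 1))) as [K HK]; [apply Rdiv_lt_0_compat; lra|].
    exists K. pose proof (HK K (le_n K)). pose proof (pow_le (/2) K ltac:(lra)).
    apply (Rmult_lt_compat_l (2 * C + 1)) in H; [|lra].
    replace ((2 * C + 1) * (eps / (2 * C + 1))) with eps in H by (field; lra). nra. }
  exists s. split; [|split; auto].
  - apply (Hcl (partial_sum a)); auto.
    induction n; simpl; [apply ospace0|apply ospaceD; auto].
  - pose proof (Hbd 0%nat) as H. simpl in H. replace (hsub s hzero) with s in H by vring. lra.
Qed.

Section ClosedSum.
Context {X : HilbertSpace} (M N : OrthProj X).
Hypothesis HMc : is_closed (ospace M).
Hypothesis HNc : is_closed (ospace N).
Hypothesis Hsc : is_closed (msum (ospace M) (ospace N)).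
Notation Y := (msum (ospace M) (ospace N)).
Implicit Types y : X.

Lemma msum_mem m n : ospace M m -> ospace N n -> Y (hadd m n).
Proof. intros. exists m, n. auto. Qed.

Lemma msum_comb s t a b : Y a -> Y b -> Y (hadd (hscal s a) (hscal t b)).
Proof.
  intros [m1 [n1 [H1 [H2 ->]]]] [m2 [n2 [H3 [H4 ->]]]].
  exists (hadd (hscal s m1) (hscal t m2)), (hadd (hscal s n1) (hscal t n2)).
  split; [apply ospaceD; apply ospaceZ; auto|]. split; [apply ospaceD; apply ospaceZ; auto|]. vring.
Qed.

Definition bounded_part (k : nat) (y : X) : Prop :=
  exists m n, ospace M m /\ ospace N n /\ y = hadd m n /\ hnorm m <= INR k.

Lemma decomp_near_zero : exists k r, r > 0 /\ forall y, Y y -> hnorm y < r ->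
  forall eps, eps > 0 -> exists m n, ospace M m /\ ospace N n /\
    hnorm m <= 2 * INR k /\ hnorm (hsub y (hadd m n)) < eps.
Proof.
  destruct (baire_category Y bounded_part Hsc) with (y_init := @hzero X)
    as [k [y0 [r [Hr [Hy0 Happ]]]]].
  - intros y [m [n [Hm [Hn ->]]]].
    destruct (INR_archimed 1 (hnorm m)) as [j Hj]; [lra|]. exists j, m, n. repeat split; auto. lra.
  - exists hzero, hzero. repeat split; [apply ospace0|apply ospace0|vring].
  - exists k, r. split; auto. intros y Hy Hyr eps He.
    assert (Hy0y : Y (hadd y0 y))
      by (replace (hadd y0 y) with (hadd (hscal 1 y0) (hscal 1 y)) by vring; apply msum_comb; auto).
    destruct (Happ (hadd y0 y) Hy0y) with (eps := eps / 2)
      as [e1 [[m1 [n1 [Hm1 [Hn1 [-> Bm1]]]]] He1]]; [|lra|].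
    { replace (hsub (hadd y0 y) y0) with y by vring. auto. }
    destruct (Happ y0 Hy0) with (eps := eps / 2)
      as [e2 [[m2 [n2 [Hm2 [Hn2 [-> Bm2]]]]] He2]]; [rewrite hsub_diag, hnorm_0; lra|lra|].
    exists (hsub m1 m2), (hsub n1 n2). repeat split; try apply ospaceB; auto.
    + pose proof (hnorm_triangle m1 (hopp m2)). rewrite hnorm_opp in H. unfold hsub. lra.
    + replace (hsub y (hadd (hsub m1 m2) (hsub n1 n2))) with
        (hadd (hsub (hadd y0 y) (hadd m1 n1)) (hopp (hsub y0 (hadd m2 n2)))) by vring.
      pose proof (hnorm_triangle (hsub (hadd y0 y) (hadd m1 n1)) (hopp (hsub y0 (hadd m2 n2)))).
      rewrite hnorm_opp in H. lra.
Qed.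

Lemma decomp_approx : exists C0, C0 > 0 /\ forall y, Y y -> forall eps, eps > 0 ->
  exists m n, ospace M m /\ ospace N n /\ hnorm m <= C0 * hnorm y /\ hnorm (hsub y (hadd m n)) < eps.
Proof.
  destruct decomp_near_zero as [k [r [Hr HA]]].
  pose proof (pos_INR k) as Hk.
  assert (HC : 0 <= 4 * INR k / r) by (apply Rmult_le_pos; [lra|left; apply Rinv_0_lt_compat; lra]).
  exists (4 * INR k / r + 1). split; [lra|]. intros y Hy eps He.
  destruct (Req_dec (hnorm y) 0) as [Hz|Hnz].
  { apply hnorm_eq0 in Hz. subst y. exists hzero, hzero. repeat split; try apply ospace0.
    - rewrite hnorm_0. lra.
    - replace (hsub hzero (hadd hzero hzero)) with (@hzero X) by vring. rewrite hnorm_0. lra. }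
  set (h := hnorm y). assert (Hh : 0 < h) by (pose proof (hnorm_ge0 y); unfold h; lra).
  set (s := r / (2 * h)). assert (Hs : 0 < s) by (unfold s; apply Rdiv_lt_0_compat; lra).
  assert (Hsy : Y (hscal s y))
    by (replace (hscal s y) with (hadd (hscal s y) (hscal 0 y)) by vring; apply msum_comb; auto).
  assert (Hys : hnorm (hscal s y) < r).
  { rewrite hnorm_scal, Rabs_right by lra. fold h. unfold s. field_simplify; lra. }
  destruct (HA (hscal s y) Hsy Hys (eps * s)) as [m [n [Hm [Hn [Bm Br]]]]]; [nra|].
  exists (hscal (/s) m), (hscal (/s) n). repeat split; try apply ospaceZ; auto.
  - rewrite hnorm_scal, Rabs_right by (left; apply Rinv_0_lt_compat; auto).
    fold h. apply (Rmult_le_reg_l s); auto.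
    rewrite <- Rmult_assoc, Rinv_r, Rmult_1_l by lra.
    eapply Rle_trans; [apply Bm|].
    unfold s. replace (r / (2 * h) * ((4 * INR k / r + 1) * h)) with (2 * INR k + r / 2)
      by (field; lra). lra.
  - replace (hsub y (hadd (hscal (/ s) m) (hscal (/ s) n))) with
      (hscal (/s) (hsub (hscal s y) (hadd m n)))
      by (apply eq_of_inner_sub; autorewrite with inner; field; lra).
    rewrite hnorm_scal, Rabs_right by (left; apply Rinv_0_lt_compat; auto).
    apply (Rmult_lt_reg_l s); auto. rewrite <- Rmult_assoc, Rinv_r by lra. lra.
Qed.

Lemma iterated_decomp (C0 : R) : 0 <= C0 ->
  (forall y, Y y -> forall eps, eps > 0 -> exists m n, ospace M m /\ ospace N n /\
     hnorm m <= C0 * hnorm y /\ hnorm (hsub y (hadd m n)) < eps) ->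
  forall y, Y y -> 0 < hnorm y -> exists ms ns : nat -> X,
    (forall j, ospace M (ms j) /\ ospace N (ns j) /\ hnorm (ms j) <= C0 * hnorm y * (/2)^j) /\
    forall j, hnorm (hsub y (hadd (partial_sum ms j) (partial_sum ns j))) <= hnorm y * (/2)^j.
Proof.
  intros HC0 Happ y Hy Hh. set (h := hnorm y) in *.
  set (good := fun z eps (p : X * X) => ospace M (fst p) /\ ospace N (snd p) /\
     hnorm (fst p) <= C0 * hnorm z /\ hnorm (hsub z (hadd (fst p) (snd p))) < eps).
  set (pick := fun z eps => epsilon (inhabits (@hzero X, @hzero X)) (good z eps)).
  assert (Hpick : forall z eps, Y z -> eps > 0 -> good z eps (pick z eps)).
  { intros z eps Hz He. apply epsilon_spec.
    destruct (Happ z Hz eps He) as [m [n Hmn]]. exists (m, n). exact Hmn. }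
  set (eps_ := fun j : nat => h * (/2)^(S j)).
  assert (Heps : forall j, eps_ j > 0) by (intro j; apply Rmult_lt_0_compat; auto; apply pow_lt; lra).
  set (ys := fix ys (j : nat) : X := match j with O => y
     | S j' => hsub (ys j') (hadd (fst (pick (ys j') (eps_ j'))) (snd (pick (ys j') (eps_ j')))) end).
  set (ms := fun j => fst (pick (ys j) (eps_ j))).
  set (ns := fun j => snd (pick (ys j) (eps_ j))).
  assert (Hys : forall j, Y (ys j) /\ hnorm (ys j) <= h * (/2)^j).
  { induction j as [|j [H1 H2]]; [simpl; split; auto; unfold h; lra|].
    destruct (Hpick (ys j) (eps_ j) H1 (Heps j)) as [A [B [_ D]]]. split; [|left; exact D].
    change (ys (S j)) with (hsub (ys j) (hadd (ms j) (ns j))).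
    replace (hsub (ys j) (hadd (ms j) (ns j)))
      with (hadd (hscal 1 (ys j)) (hscal (-1) (hadd (ms j) (ns j)))) by vring.
    apply msum_comb, msum_mem; auto. }
  assert (Hg : forall j, good (ys j) (eps_ j) (ms j, ns j)).
  { intro j. unfold ms, ns. rewrite <- surjective_pairing. apply Hpick; [apply Hys|apply Heps]. }
  exists ms, ns. split.
  - intro j. destruct (Hg j) as [HmM [HnN Hb]]. repeat split; auto. simpl in Hb.
    destruct (Hys j) as [_ Hy2]. rewrite Rmult_assoc.
    eapply Rle_trans; [apply Hb|]. apply Rmult_le_compat_l; lra.
  - intro j. replace (hsub y (hadd (partial_sum ms j) (partial_sum ns j))) with (ys j); [apply Hys|].
    induction j; [simpl; vring|].
    change (ys (S j)) with (hsub (ys j) (hadd (ms j) (ns j))). simpl partial_sum. rewrite IHj. vring.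
Qed.

(* The closed-range form of the open mapping theorem for [(m, n) |-> m + n]:
   approximate decompositions with controlled [m] are summed geometrically. *)
Lemma bounded_decomp : exists K, K > 0 /\ forall y, Y y ->
  exists m n, ospace M m /\ ospace N n /\ y = hadd m n /\ hnorm m <= K * hnorm y.
Proof.
  destruct decomp_approx as [C0 [HC0 Happ]].
  exists (2 * C0). split; [lra|]. intros y Hy.
  destruct (Req_dec (hnorm y) 0) as [Hz|Hnz].
  { apply hnorm_eq0 in Hz. subst y. exists hzero, hzero.
    repeat split; try apply ospace0; [vring|rewrite hnorm_0; lra]. }
  assert (Hh : 0 < hnorm y) by (pose proof (hnorm_ge0 y); lra).
  destruct (iterated_decomp C0 ltac:(lra) Happ y Hy Hh) as [ms [ns [Hmn Hres]]].
  destruct (geometric_series M ms (C0 * hnorm y)) as [s [HsM [Hconv Hs]]]; auto.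
  { intro j. apply Hmn. }
  { intro j. apply Hmn. }
  set (res := fun j => hsub y (hadd (partial_sum ms j) (partial_sum ns j))).
  assert (Hres0 : converges res hzero).
  { apply (converges_geometric _ _ (hnorm y)). intro j.
    replace (hsub (res j) hzero) with (res j) by vring. apply Hres. }
  assert (HnsN : ospace N (hsub y s)).
  { apply (HNc (partial_sum ns)); [induction n; simpl; [apply ospace0|apply ospaceD; auto; apply Hmn]|].
    replace (partial_sum ns)
      with (fun j => hadd (hadd y (hscal (-1) (partial_sum ms j))) (hscal (-1) (res j)))
      by (apply functional_extensionality; intro j; unfold res; vring).
    replace (hsub y s) with (hadd (hadd y (hscal (-1) s)) (hscal (-1) hzero)) by vring.
    apply converges_add; [apply converges_add; [apply converges_const|]|]; apply converges_scal; auto. }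
  exists s, (hsub y s). repeat split; auto; [vring|lra].
Qed.

End ClosedSum.

Lemma cF_is_lub {X : HilbertSpace} (A B : X -> Prop) : A hzero -> B hzero ->
  is_lub (cF_set A B) (cF A B).
Proof.
  intros HA HB. unfold cF. apply epsilon_spec.
  destruct (completeness (cF_set A B)) as [m Hm]; [| |exists m; exact Hm].
  - exists 1. intros r [u [w [_ [_ [Hu [_ [_ [Hw ->]]]]]]]].
    pose proof (abs_inner_le_hnorm u w). pose proof (hnorm_ge0 u). pose proof (hnorm_ge0 w). nra.
  - exists 0, hzero, hzero.
    repeat split; auto; try (intros e _; apply inner_0_l); rewrite ?hnorm_0, ?inner_0_l, ?Rabs_R0; lra.
Qed.

Section FriedrichsAngle.
Context {X : HilbertSpace} (M N : OrthProj X).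
Notation W := (inter (ospace M) (ospace N)).
Notation c := (cF (ospace M) (ospace N)).

Lemma orth_compl_scal (A : X -> Prop) t u : orth_compl A u -> orth_compl A (hscal t u).
Proof. intros H e He. rewrite hinner_scal_l, H; auto. ring. Qed.

Lemma cF_bound : 0 <= c /\ forall u w, ospace M u -> ospace N w ->
  orth_compl W u -> orth_compl W w -> (hinner u w)^2 <= c^2 * sqnorm u * sqnorm w.
Proof.
  destruct (cF_is_lub (ospace M) (ospace N) (ospace0 M) (ospace0 N)) as [Hub _].
  assert (Hc0 : 0 <= c).
  { apply Hub. exists hzero, hzero.
    repeat split; try apply ospace0; try (intros e _; apply inner_0_l);
      rewrite ?hnorm_0, ?inner_0_l, ?Rabs_R0; lra. }
  split; auto. intros u w Hu Hw Pu Pw.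
  destruct (Req_dec (hnorm u) 0) as [Hu0|Hu0].
  { apply hnorm_eq0 in Hu0. subst u. unfold sqnorm. rewrite !inner_0_l. nra. }
  destruct (Req_dec (hnorm w) 0) as [Hw0|Hw0].
  { apply hnorm_eq0 in Hw0. subst w. unfold sqnorm. rewrite !inner_0_r. nra. }
  pose proof (hnorm_ge0 u). pose proof (hnorm_ge0 w).
  set (a := hnorm u) in *. set (b := hnorm w) in *.
  assert (Ha0 : 0 < a) by lra. assert (Hb0 : 0 < b) by lra.
  assert (Ha : 0 < /a) by (apply Rinv_0_lt_compat; lra).
  assert (Hb : 0 < /b) by (apply Rinv_0_lt_compat; lra).
  assert (Hin : cF_set (ospace M) (ospace N) (Rabs (hinner (hscal (/a) u) (hscal (/b) w)))).
  { exists (hscal (/a) u), (hscal (/b) w).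
    repeat split; try apply ospaceZ; try apply orth_compl_scal; auto;
      rewrite hnorm_scal, Rabs_right by lra; fold a b; rewrite Rinv_l by lra; lra. }
  apply Hub in Hin. rewrite hinner_scal_l, inner_scal_r, !Rabs_mult, !Rabs_right in Hin by lra.
  assert (Habs : Rabs (hinner u w) <= c * a * b).
  { apply (Rmult_le_reg_l (/a * /b)); [nra|].
    replace (/ a * / b * (c * a * b)) with c by (field; lra). lra. }
  rewrite <- (hnorm_sqr u), <- (hnorm_sqr w). fold a b.
  rewrite <- pow2_abs. pose proof (Rabs_pos (hinner u w)). nra.
Qed.

Section ClosedSumAngle.
Hypothesis HMc : is_closed (ospace M).
Hypothesis HNc : is_closed (ospace N).
Hypothesis Hsc : is_closed (msum (ospace M) (ospace N)).

(* The component of [u - w] in [M] controls [u], since [u] is orthogonal to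
   the part of that component lying in [M ∩ N]. *)
Lemma angle_bound : exists K, K > 0 /\ forall u w, ospace M u -> orth_compl W u ->
  ospace N w -> hnorm u <= K * hnorm (hsub u w).
Proof.
  destruct (bounded_decomp M N HMc HNc Hsc) as [K [HK Hdec]].
  exists K. split; auto. intros u w Hu Pu Hw.
  assert (Hy : msum (ospace M) (ospace N) (hsub u w)).
  { exists u, (hscal (-1) w). repeat split; auto; [apply ospaceZ; auto|vring]. }
  destruct (Hdec _ Hy) as [m [n [Hm [Hn [Eq Hmb]]]]].
  assert (He : W (hsub u m)).
  { split; [apply ospaceB; auto|].
    replace (hsub u m) with (hadd n w) by (apply eq_of_inner_sub;
      replace u with (hadd (hadd m n) w) at 1 2 by (rewrite <- Eq; vring);
      autorewrite with inner; ring).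
    apply ospaceD; auto. }
  assert (Hum : sqnorm u = hinner u m).
  { pose proof (Pu _ He) as H. rewrite inner_sub_r in H. unfold sqnorm. lra. }
  pose proof (inner_le_hnorm u m). pose proof (hnorm_ge0 u). pose proof (hnorm_ge0 m).
  rewrite <- hnorm_sqr in Hum.
  assert (hnorm u <= hnorm m) by nra. lra.
Qed.

Lemma cF_lt1 : c < 1.
Proof.
  destruct (cF_is_lub (ospace M) (ospace N) (ospace0 M) (ospace0 N)) as [_ Hleast].
  destruct angle_bound as [K [HK Hang]].
  apply Rnot_le_lt. intro Hc1.
  set (eps := / (8 * K * K + 2)).
  assert (Heps : 0 < eps) by (unfold eps; apply Rinv_0_lt_compat; nra).
  assert (Heps2 : eps <= 1/2).
  { unfold eps. apply (Rmult_le_reg_l (8 * K * K + 2)); [nra|]. rewrite Rinv_r by nra. nra. }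
  assert (HKe : 2 * K * K * eps < 1/4).
  { unfold eps. apply (Rmult_lt_reg_l (8 * K * K + 2)); [nra|].
    replace ((8 * K * K + 2) * (2 * K * K * / (8 * K * K + 2))) with (2 * K * K) by (field; nra).
    nra. }
  assert (Hex : exists r, cF_set (ospace M) (ospace N) r /\ r > 1 - eps).
  { apply NNPP. intro Hno.
    assert (Hb : is_upper_bound (cF_set (ospace M) (ospace N)) (1 - eps)).
    { intros r Hr. apply Rnot_lt_le. intro Hlt. apply Hno. exists r; split; auto. }
    apply Hleast in Hb. lra. }
  destruct Hex as [r [[u [w [Hu [Pu [Nu [Hw [_ [Nw ->]]]]]]]] Hr]].
  set (s := if Rle_dec 0 (hinner u w) then 1 else -1).
  assert (Hs : s * hinner u w = Rabs (hinner u w) /\ s * s = 1).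
  { unfold s. destruct (Rle_dec 0 (hinner u w)).
    - rewrite Rabs_right by lra. split; ring.
    - rewrite Rabs_left by lra. split; ring. }
  pose proof (sqnorm_le_of_hnorm u 1 Nu). pose proof (sqnorm_le_of_hnorm w 1 Nw).
  assert (Hnd : sqnorm (hsub u (hscal s w)) <= 2 * eps).
  { rewrite sqnorm_sub, sqnorm_scal, inner_scal_r. destruct Hs as [-> ->]. lra. }
  pose proof (Hang u (hscal s w) Hu Pu (ospaceZ N s w Hw)) as Hb.
  pose proof (sqnorm_le_of_hnorm _ _ Hb) as Hb2.
  replace (K * hnorm (hsub u (hscal s w)) * (K * hnorm (hsub u (hscal s w))))
    with (K * K * sqnorm (hsub u (hscal s w))) in Hb2 by (rewrite <- hnorm_sqr; ring).
  pose proof (cauchy_schwarz u w). pose proof (sqnorm_ge0 u). pose proof (sqnorm_ge0 w).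
  assert (Hr2 : (1 - eps) * (1 - eps) < (Rabs (hinner u w))^2) by (pose proof (Rabs_pos (hinner u w)); nra).
  rewrite pow2_abs in Hr2.
  assert (K * K * sqnorm (hsub u (hscal s w)) <= K * K * (2 * eps)) by (apply Rmult_le_compat_l; nra).
  nra.
Qed.

End ClosedSumAngle.
End FriedrichsAngle.

Lemma contraction_arith (A B P c : R) : 0 <= A -> 0 <= B -> 0 <= P -> c^2 < 1 ->
  A <= c^2 * B -> (B - A)^2 <= P * B -> (1 - c^2) * (B - A) <= P.
Proof.
  intros HA HB HP Hc HAB HCS.
  destruct (Req_dec B 0) as [HB0|HB0]; [subst B; nra|].
  apply (Rmult_le_reg_r B); [lra|].
  assert ((1 - c^2) * B <= B - A) by lra.
  assert (0 <= B - A) by nra. nra.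
Qed.

Section LinearRate.
Context {X : HilbertSpace} (M N : OrthProj X).
Hypothesis HMc : is_closed (ospace M).
Hypothesis HNc : is_closed (ospace N).
Hypothesis Hsc : is_closed (msum (ospace M) (ospace N)).
Notation PM := (oproj M).
Notation PN := (oproj N).
Notation T := (DRl M N).
Notation W := (inter (ospace M) (ospace N)).
Notation c := (cF (ospace M) (ospace N)).
Implicit Types g q : X.

Lemma inter_closed_affine : closed_affine W.
Proof.
  split; [exists hzero; split; apply ospace0|split].
  - intros x y t [Hx1 Hx2] [Hy1 Hy2]. split; apply ospaceD; apply ospaceZ; auto.
  - intros u l Hu Hc. split; [apply (HMc u)|apply (HNc u)]; auto; intro n; apply Hu.
Qed.

Lemma msum_of_perp q : (forall b, orth_compl (ospace M) b -> orth_compl (ospace N) b -> hinner q b = 0) ->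
  msum (ospace M) (ospace N) q.
Proof.
  intros Hq. set (Y := msum (ospace M) (ospace N)).
  assert (HY0 : Y hzero) by (exists hzero, hzero; repeat split; try apply ospace0; vring).
  assert (HYa : is_affine Y) by (intros a b t Ha Hb; apply msum_comb; auto).
  destruct (proj_closure_spec Y q (ex_intro _ _ HY0) HYa) as [Hp Ho].
  rewrite closure_id in Hp, Ho by exact Hsc.
  set (p := proj Y q) in *. set (r := hsub q p).
  assert (Hrp : hinner r p = 0)
    by (pose proof (Ho _ HY0) as H; rewrite inner_sub_r, inner_0_r in H; fold r in H; lra).
  assert (Hry : forall y, Y y -> hinner r y = 0).
  { intros y Hy. pose proof (Ho y Hy) as H. rewrite inner_sub_r in H. fold r in H. lra. }
  assert (Hqr : hinner q r = 0).
  { apply Hq; intros s Hs; apply Hry;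
      [exists s, hzero|exists hzero, s]; repeat split; auto; try apply ospace0; vring. }
  replace q with p; auto.
  symmetry. apply eq_of_inner_sub. change (hinner (hsub q p) r = 0).
  rewrite inner_sub_l, Hqr, (hinner_sym p), Hrp. ring.
Qed.

Lemma DRl_contract_range g : (forall f, T f = f -> hinner g f = 0) ->
  sqnorm (PN (PM g)) <= c^2 * sqnorm (PM g).
Proof.
  intros Hg. destruct (cF_bound M N) as [_ Hcf]. set (p := PM g).
  assert (Hp : orth_compl W p).
  { intros e [HM HN]. unfold p. rewrite oproj_sym, (oproj_id M e HM). apply Hg, DRl_fix_of_mem; auto. }
  assert (HNp : orth_compl W (PN p)).
  { intros e [HM HN]. rewrite oproj_sym, (oproj_id N e HN). apply Hp; split; auto. }
  pose proof (Hcf p (PN p) (oproj_mem M g) (oproj_mem N p) Hp HNp) as H.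
  rewrite <- (inner_oproj_mem N p (PN p) (oproj_mem N p)) in H.
  change (hinner (PN p) (PN p)) with (sqnorm (PN p)) in H.
  pose proof (sqnorm_ge0 (PN p)). pose proof (sqnorm_ge0 p).
  destruct (Req_dec (sqnorm (PN p)) 0) as [Hz|Hnz]; [rewrite Hz; nra|].
  apply (Rmult_le_reg_l (sqnorm (PN p))); nra.
Qed.

Lemma DRl_contract_kernel g : (forall f, T f = f -> hinner g f = 0) ->
  sqnorm (hsub (hsub g (PM g)) (PN (hsub g (PM g)))) <= c^2 * sqnorm (hsub g (PM g)).
Proof.
  intros Hg. destruct (cF_bound M N) as [Hc0 Hcf]. pose proof (cF_lt1 M N HMc HNc Hsc) as Hc1.
  set (q := hsub g (PM g)).
  assert (Hqperp : orth_compl (ospace M) q) by (intros e He; apply oproj_orth; auto).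
  destruct (msum_of_perp q) as [m [n [Hm [Hn Eq]]]].
  { intros b HbM HbN. unfold q. rewrite inner_sub_l, oproj_sym, (oproj_perp M b HbM), inner_0_r.
    rewrite (Hg b (DRl_fix_of_perp M N b HbM HbN)). ring. }
  destruct (closed_affine_proj W n inter_closed_affine) as [[HwM HwN] _].
  set (w := proj W n) in *.
  set (m' := hadd m w). set (n' := hsub n w).
  assert (Hm' : ospace M m') by (apply ospaceD; auto).
  assert (Hn' : ospace N n') by (apply ospaceB; auto).
  assert (Eq' : q = hadd m' n') by (rewrite Eq; unfold m', n'; vring).
  assert (Hn'W : orth_compl W n').
  { intros e He. replace e with (hsub e hzero) by vring.
    apply closed_affine_proj_orth; auto using inter_closed_affine. split; apply ospace0. }
  assert (Hm'W : orth_compl W m').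
  { intros e He. replace m' with (hsub q n') by (rewrite Eq'; vring).
    rewrite inner_sub_l, Hqperp, Hn'W; [ring|auto|apply He]. }
  pose proof (Hcf m' n' Hm' Hn' Hm'W Hn'W) as Hangle.
  assert (HA : sqnorm m' + hinner m' n' = 0)
    by (pose proof (Hqperp m' Hm') as H; rewrite Eq', hinner_add_l, (hinner_sym n') in H; auto).
  assert (HQ : sqnorm q = sqnorm n' - sqnorm m') by (rewrite Eq', sqnorm_add; lra).
  assert (HY : hinner (PN q) n' = sqnorm q)
    by (rewrite (inner_oproj_mem N q n' Hn'), HQ, Eq', hinner_add_l; unfold sqnorm in *; lra).
  pose proof (cauchy_schwarz (PN q) n') as HCS. rewrite HY, HQ in HCS.
  pose proof (sqnorm_ge0 m') as Hm0. pose proof (sqnorm_ge0 n') as Hn0.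
  pose proof (sqnorm_ge0 (PN q)) as Hq0. assert (Hc2 : c^2 < 1) by nra.
  assert (HAB : sqnorm m' <= c^2 * sqnorm n').
  { destruct (Req_dec (sqnorm m') 0) as [HA0|HA0]; [rewrite HA0; nra|].
    apply (Rmult_le_reg_l (sqnorm m')); [lra|].
    replace (hinner m' n') with (- sqnorm m') in Hangle by lra. nra. }
  pose proof (contraction_arith _ _ _ _ Hm0 Hn0 Hq0 Hc2 HAB HCS).
  pose proof (oproj_pythagoras N q). rewrite HQ in *. nra.
Qed.

Lemma DRl_contract g : (forall f, T f = f -> hinner g f = 0) -> sqnorm (T g) <= c^2 * sqnorm g.
Proof.
  intros Hg. rewrite sqnorm_DRl, (oproj_pythagoras M g).
  pose proof (DRl_contract_range g Hg). pose proof (DRl_contract_kernel g Hg). lra.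
Qed.

Lemma iter_DRl_rate g n : (forall f, T f = f -> hinner g f = 0) ->
  hnorm (Nat.iter n T g) <= c^n * hnorm g.
Proof.
  intros Hg. destruct (cF_bound M N) as [Hc0 _].
  apply hnorm_le_of_sqnorm; [apply Rmult_le_pos; [apply pow_le; auto|apply hnorm_ge0]|].
  replace (c ^ n * hnorm g * (c ^ n * hnorm g)) with ((c^n)^2 * sqnorm g) by (rewrite <- hnorm_sqr; ring).
  induction n; simpl Nat.iter; [simpl; lra|].
  eapply Rle_trans; [apply DRl_contract, iter_DRl_perp_fix; auto|].
  simpl pow. simpl pow in IHn. nra.
Qed.

End LinearRate.

Section AffineProjection.
Context {X : HilbertSpace}.
Implicit Types x y z w v : X.

Lemma proj_id (C : X -> Prop) c : C c -> proj C c = c.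
Proof. intro Hc. apply proj_eq; auto. intros d _. rewrite hsub_diag, inner_0_l; auto. Qed.

Lemma proj_shift (C : X -> Prop) y w : closed_affine C -> orth_compl (par C) w ->
  proj C (hadd y w) = proj C y.
Proof.
  intros HC Hw. destruct (closed_affine_proj C y HC) as [Hp Ho].
  apply proj_eq; auto. intros c Hc.
  replace (hsub (hadd y w) (proj C y)) with (hadd (hsub y (proj C y)) w) by vring.
  rewrite hinner_add_l, Ho, Hw by (auto; exists c, (proj C y); auto). ring.
Qed.

Lemma proj_translate v (V : X -> Prop) q : closed_affine V ->
  proj (translate v V) q = hadd v (proj V (hsub q v)).
Proof.
  intros HV. destruct (closed_affine_proj V (hsub q v) HV) as [Hp Ho].
  apply proj_eq; [exists (proj V (hsub q v)); auto|].
  intros c [w [Hw ->]].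
  replace (hsub q (hadd v (proj V (hsub q v)))) with (hsub (hsub q v) (proj V (hsub q v))) by vring.
  replace (hsub (hadd v w) (hadd v (proj V (hsub q v)))) with (hsub w (proj V (hsub q v))) by vring.
  auto.
Qed.

Lemma translate_closed_affine v (V : X -> Prop) : closed_affine V -> closed_affine (translate v V).
Proof.
  intros [[w0 Hw0] [HA Hcl]]. split; [|split].
  - exists (hadd v w0), w0; auto.
  - intros x y t [w1 [H1 ->]] [w2 [H2 ->]]. exists (hadd (hscal t w1) (hscal (1 - t) w2)).
    split; [apply HA; auto|vring].
  - intros u l Hu Hc. exists (hsub l v). split; [|vring].
    apply (Hcl (fun n => hsub (u n) v)).
    + intro n. destruct (Hu n) as [w [Hw ->]]. replace (hsub (hadd v w) v) with w by vring. auto.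
    + intros eps He. destruct (Hc eps He) as [N HN]. exists N. intros n Hn.
      replace (hsub (hsub (u n) v) (hsub l v)) with (hsub (u n) l) by vring. auto.
Qed.

End AffineProjection.

Section AffineDR.
Context {X : HilbertSpace} (U V : X -> Prop) (hU : closed_affine U) (hV : closed_affine V).
Implicit Types x y z w v : X.
Notation M := (par_proj U hU).
Notation N := (par_proj V hV).

Lemma DR_diff z1 z2 : DR U V z1 = hadd (DR U V z2) (DRl M N (hsub z1 z2)).
Proof.
  unfold DR, DRl. rewrite (proj_par_proj U hU z1 z2).
  rewrite (proj_par_proj V hV _ (hsub (hscal 2 (proj U z2)) z2)).
  replace (hsub (hsub (hscal 2 (hadd (proj U z2) (oproj M (hsub z1 z2)))) z1)
             (hsub (hscal 2 (proj U z2)) z2))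
    with (hsub (hscal 2 (oproj M (hsub z1 z2))) (hsub z1 z2)) by vring.
  vring.
Qed.

Lemma ran_DR_affine : is_affine (ran_Id_minus (DR U V)).
Proof.
  intros a b t [z1 ->] [z2 ->]. exists (hadd (hscal t z1) (hscal (1 - t) z2)).
  rewrite (DR_diff z1 z2), (DR_diff (hadd (hscal t z1) (hscal (1 - t) z2)) z2).
  replace (hsub (hadd (hscal t z1) (hscal (1 - t) z2)) z2)
    with (hadd (hscal t (hsub z1 z2)) (hscal 0 (hsub z1 z2))) by vring.
  rewrite DRl_comb. vring.
Qed.

Lemma DR_shift w y : orth_compl (par U) w -> orth_compl (par V) w ->
  DR U V (hadd y w) = hadd (DR U V y) w.
Proof.
  intros HwU HwV. unfold DR. rewrite proj_shift; auto.
  replace (hsub (hscal 2 (proj U y)) (hadd y w)) with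
    (hadd (hsub (hscal 2 (proj U y)) y) (hscal (-1) w)) by vring.
  rewrite proj_shift; [vring|auto|]. intros e He. rewrite hinner_scal_l, HwV; auto. ring.
Qed.

Lemma iter_Tshift w x n : orth_compl (par U) w -> orth_compl (par V) w ->
  Nat.iter n (Tshift (DR U V) w) x = hadd (Nat.iter n (DR U V) x) (hscal (INR n) w).
Proof.
  intros HU HV. induction n; simpl Nat.iter; [simpl; vring|].
  rewrite IHn. unfold Tshift.
  replace (hadd (hadd (Nat.iter n (DR U V) x) (hscal (INR n) w)) w)
    with (hadd (Nat.iter n (DR U V) x) (hscal (INR (S n)) w)) by (rewrite S_INR; vring).
  apply DR_shift; intros e He; rewrite hinner_scal_l; [rewrite HU|rewrite HV]; auto; ring.
Qed.

Lemma DR_translate v y : orth_compl (par V) v -> DR U (translate v V) y = hadd (DR U V y) v.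
Proof.
  intros HvV. unfold DR. rewrite proj_translate; auto.
  replace (hsub (hsub (hscal 2 (proj U y)) y) v) with
    (hadd (hsub (hscal 2 (proj U y)) y) (hscal (-1) v)) by vring.
  rewrite proj_shift; [vring|auto|]. intros e He. rewrite hinner_scal_l, HvV; auto. ring.
Qed.

Lemma resolvent_shift_proj v y : orth_compl (par U) v -> resolvent_shift v U y = proj U y.
Proof.
  intros HvU. destruct (closed_affine_proj U y hU) as [HP Ho].
  set (P := proj U y) in *.
  assert (Horth : forall c, U c -> hinner (hadd (hsub y P) v) (hsub c P) = 0).
  { intros c Hc. rewrite hinner_add_l, Ho, HvU by (auto; exists c, P; auto). ring. }
  assert (HnP : normal_cone U P (hadd (hsub y P) v)) by (split; auto; intros c Hc; rewrite Horth; auto; lra).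
  unfold resolvent_shift.
  destruct (epsilon_spec (inhabits hzero) (fun z => normal_cone U z (hadd (hsub y z) v))
              (ex_intro _ P HnP)) as [Hz1 Hz2].
  set (z := epsilon (inhabits hzero) (fun z => normal_cone U z (hadd (hsub y z) v))) in *.
  pose proof (Hz2 P HP) as H1.
  replace (hinner (hadd (hsub y z) v) (hsub P z))
    with (sqnorm (hsub P z) - hinner (hadd (hsub y P) v) (hsub z P)) in H1
    by (unfold sqnorm; autorewrite with inner; ring).
  rewrite (Horth z Hz1) in H1. pose proof (sqnorm_ge0 (hsub P z)).
  symmetry. apply hsub_eq0, sqnorm_eq0. lra.
Qed.

(* [ran (Id - DR U V)] is the translate of [ran (Id - DRl M N)] by any of its
   points, so its element of least norm is a fixed point of [DRl M N]; being
   orthogonal to [par U ∩ par V], it is orthogonal to [par U] and [par V]. *)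
Lemma min_displacement_perp :
  let v := proj (closure (ran_Id_minus (DR U V))) hzero in
  ran_Id_minus (DR U V) v -> orth_compl (par U) v /\ orth_compl (par V) v.
Proof.
  intros v [z0 Hz0].
  assert (Hne : exists a, ran_Id_minus (DR U V) a) by (exists (hsub z0 (DR U V z0)), z0; auto).
  destruct (proj_closure_spec _ hzero Hne ran_DR_affine) as [_ Hmin]. fold v in Hmin.
  assert (Hfix : DRl M N v = v).
  { apply DRl_fix_of_perp_ran. intro d.
    assert (Hr : closure (ran_Id_minus (DR U V)) (hsub (hadd z0 d) (DR U V (hadd z0 d))))
      by (apply closure_incl; eexists; eauto).
    pose proof (Hmin _ Hr) as H.
    rewrite (DR_diff (hadd z0 d) z0) in H.
    replace (hsub (hadd z0 d) z0) with d in H by vring.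
    replace (hsub (hsub (hadd z0 d) (hadd (DR U V z0) (DRl M N d))) v)
      with (hsub d (DRl M N d)) in H by (rewrite Hz0; vring).
    rewrite inner_sub_l, inner_0_l in H. lra. }
  assert (HvW : orth_compl (inter (par U) (par V)) v).
  { intros e [HeU HeV]. rewrite Hz0. unfold DR.
    replace (hsub z0 (hadd (hsub z0 (proj U z0)) (proj V (hsub (hscal 2 (proj U z0)) z0))))
      with (hsub (proj U z0) (proj V (hsub (hscal 2 (proj U z0)) z0))) by vring.
    rewrite inner_sub_l, !inner_proj_par, inner_sub_l, hinner_scal_l, inner_proj_par by auto. ring. }
  exact (DRl_fix_perp M N v Hfix HvW).
Qed.

Lemma ran_DR_common_point v : ran_Id_minus (DR U V) v -> exists z, U z /\ translate v V z.
Proof.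
  intros [z0 Hz0]. exists (proj U z0). split; [apply (closed_affine_proj U z0 hU)|].
  exists (proj V (hsub (hscal 2 (proj U z0)) z0)). split; [apply (closed_affine_proj V _ hV)|].
  rewrite Hz0. unfold DR. vring.
Qed.

Lemma proj_iter_identities v x n : orth_compl (par U) v -> orth_compl (par V) v ->
  let T := DR U V in
  proj U (Nat.iter n T x) = proj U (hadd (Nat.iter n T x) (hscal (INR n) v)) /\
  proj U (hadd (Nat.iter n T x) (hscal (INR n) v)) = proj U (Nat.iter n (Tshift T v) x) /\
  proj U (Nat.iter n (Tshift T v) x) = proj U (Nat.iter n (DR U (translate v V)) x) /\
  proj U (Nat.iter n (DR U (translate v V)) x) = resolvent_shift v U (Nat.iter n (Tshift T v) x).
Proof.
  intros HvU HvV; cbv zeta.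
  assert (HDR : DR U (translate v V) = Tshift (DR U V) v).
  { apply functional_extensionality; intro y. unfold Tshift.
    rewrite DR_translate, DR_shift; auto. }
  rewrite HDR, iter_Tshift, resolvent_shift_proj by auto.
  rewrite proj_shift; [repeat split; auto|exact hU|].
  intros e He. rewrite hinner_scal_l, HvU; auto. ring.
Qed.

End AffineDR.

Lemma DR_shadow_error {X : HilbertSpace} (U W : X -> Prop) (hU : closed_affine U)
  (hW : closed_affine W) z x : U z -> W z ->
  let M := par_proj U hU in let N := par_proj W hW in
  exists g, closure (ran_Id_minus (DRl M N)) g /\ forall n,
    hsub (proj U (Nat.iter n (DR U W) x)) (proj (inter U W) x) = oproj M (Nat.iter n (DRl M N) g).
Proof.
  intros HzU HzW M N.
  assert (HprojU : forall y, proj U (hadd z y) = hadd z (oproj M y)).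
  { intro y. rewrite (proj_par_proj U hU _ z), proj_id by auto. do 2 f_equal. vring. }
  assert (Hfix : DR U W z = z).
  { unfold DR. rewrite (proj_id U z HzU).
    replace (hsub (hscal 2 z) z) with z by vring. rewrite proj_id by auto. vring. }
  assert (Hiter : forall n y, Nat.iter n (DR U W) (hadd z y) = hadd z (Nat.iter n (DRl M N) y)).
  { induction n; intro y; [reflexivity|]. simpl. rewrite IHn, (DR_diff U W hU hW _ z), Hfix.
    do 2 f_equal. vring. }
  destruct (fix_ran_decomp M N (hsub x z)) as [f [g [Hxz [Hf Hg]]]].
  destruct (proj1 (DRl_fixP M N f) Hf) as [HNf _].
  assert (HfW : inter (par U) (par W) (oproj M f))
    by (split; [apply (oproj_mem M)|rewrite <- HNf; apply (oproj_mem N)]).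
  assert (Hlim : proj (inter U W) x = hadd z (oproj M f)).
  { apply proj_eq; [split; apply par_add_mem; auto; [apply hU|apply HfW|apply hW|apply HfW]|].
    intros c [HcU HcW].
    assert (He : inter (par U) (par W) (hsub c (hadd z (oproj M f)))).
    { replace (hsub c (hadd z (oproj M f))) with (hsub (hsub c z) (oproj M f)) by vring.
      split; [apply (ospaceB M)|apply (ospaceB N)]; [exists c, z| |exists c, z|]; auto; apply HfW. }
    replace (hsub x (hadd z (oproj M f))) with (hadd (hsub f (oproj M f)) g) by (rewrite <- (hadd_0 x);
      replace (hadd x hzero) with (hadd z (hsub x z)) by vring; rewrite Hxz; vring).
    rewrite hinner_add_l, (oproj_orth M) by apply He.
    rewrite (closure_ran_perp_fix M N g Hg) by (apply DRl_fix_of_mem; apply He). ring. }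
  exists g. split; auto. intro n.
  replace x with (hadd z (hadd f g)) at 1 by (rewrite <- Hxz; vring).
  rewrite Hiter, HprojU, Hlim, iter_DRlD, iter_DRl_fix, oprojD by auto. vring.
Qed.

Theorem theorem4p4 (X : HilbertSpace) (U V : X -> Prop)
  (hU : closed_affine U) (hV : closed_affine V) (x : X) :
  let T := DR U V in
  let v := proj (closure (ran_Id_minus T)) hzero in
  ran_Id_minus T v ->
  (forall n : nat,
     proj U (Nat.iter n T x) = proj U (hadd (Nat.iter n T x) (hscal (INR n) v)) /\
     proj U (hadd (Nat.iter n T x) (hscal (INR n) v)) = proj U (Nat.iter n (Tshift T v) x) /\
     proj U (Nat.iter n (Tshift T v) x) = proj U (Nat.iter n (DR U (translate v V)) x) /\
     proj U (Nat.iter n (DR U (translate v V)) x)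
       = resolvent_shift v U (Nat.iter n (Tshift T v) x)) /\
  converges (fun n => proj U (Nat.iter n T x)) (proj (inter U (translate v V)) x) /\
  (is_closed (msum (par U) (par V)) ->
     cF (par U) (par V) < 1 /\
     exists M : R, forall n : nat,
       hnorm (hsub (proj U (Nat.iter n T x)) (proj (inter U (translate v V)) x))
         <= M * (cF (par U) (par V)) ^ n).
Proof.
  intros T v Hv.
  destruct (min_displacement_perp U V hU hV Hv) as [HvU HvV].
  pose proof (fun n => proj_iter_identities U V hU hV v x n HvU HvV) as Hid.
  split; [exact Hid|].
  destruct (ran_DR_common_point U V hU hV v Hv) as [z [HzU HzV]].
  pose proof (translate_closed_affine v V hV) as hV'.
  destruct (DR_shadow_error U _ hU hV' z x HzU HzV) as [g [Hg Herr]].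
  set (M := par_proj U hU) in *. set (N := par_proj _ hV') in *.
  assert (Hshadow : forall n, hnorm (hsub (proj U (Nat.iter n T x)) (proj (inter U (translate v V)) x))
                              <= hnorm (Nat.iter n (DRl M N) g)).
  { intro n. unfold T. destruct (Hid n) as [-> [-> [-> _]]]. rewrite Herr. apply hnorm_le_sqnorm, oproj_le. }
  split.
  - intros eps He. destruct (iter_DRl_closure_ran M N g Hg eps He) as [K HK].
    exists K. intros n Hn. pose proof (HK n Hn) as H. pose proof (Hshadow n).
    replace (hsub (Nat.iter n (DRl M N) g) hzero) with (Nat.iter n (DRl M N) g) in H by vring. lra.
  - intros Hcl. rewrite <- (par_translate v V) in Hcl |- *.
    pose proof (par_closed U hU). pose proof (par_closed _ hV').
    split; [apply (cF_lt1 M N); auto|].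
    exists (hnorm g). intro n. eapply Rle_trans; [apply Hshadow|]. rewrite Rmult_comm.
    apply (iter_DRl_rate M N); auto. apply closure_ran_perp_fix; auto.
Qed.
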